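(* For every $q\ge2$, $$P_q(\theta,\Omega_\varepsilon)=P_q(\theta,\Omega_0)+2\varepsilon q\sin\frac{\pi}{q}\,n^{(q)}(\theta)+O(\varepsilon^2),$$ where $P_q(\theta,\Omega_0)=2q\sin\frac{\pi}{q}$.
   Context: $\Omega_0$ is the unit disk; for small $\varepsilon>0$, $\Omega_\varepsilon$ is the strictly convex domain whose boundary in polar coordinates is $r=1+\varepsilon n(\theta)+\varepsilon^2 m(\theta)+O(\varepsilon^3)$, with $n,m$ real analytic $2\pi$-periodic functions, $n(\theta)=\sum_k n_k e^{ik\theta}$, $m(\theta)=\sum_k m_ke^{ik\theta}$. For a $2\pi$-periodic function $f=\sum_k f_ke^{ik\theta}$ and $q\in\mathbb{N}$, $f^{(q)}(\theta):=\sum_{j\in\mathbb{Z}}f_{jq}e^{ijq\theta}$. For $q\ge2$, $P_q(\theta,\Omega)$ is the maximal perimeter of a $q$-gon inscribed in $\Omega$ (vertices on $\partial\Omega$, in counterclockwise order, going once around) whose initial and final vertex is the boundary point with polar angle $\theta$. *)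

From Stdlib Require Import Reals Lra ClassicalEpsilon.
Open Scope R_scope.

Definition periodic2pi (f : R -> R) : Prop :=
  forall t, f (t + 2 * PI) = f t.

Definition real_analytic (f : R -> R) : Prop :=
  forall x0, exists (r : R) (a : nat -> R),
    0 < r /\ forall x, Rabs (x - x0) < r -> Pser a (x - x0) (f x).

(* The Riemann integral of f on [a,b] (well defined, independently of the
   integrability proof, whenever f is Riemann integrable). *)
Definition RInt (f : R -> R) (a b : R) : R :=
  epsilon (inhabits 0)
    (fun v => exists pr : Riemann_integrable f a b, RiemannInt pr = v).

(* Partial sums  sum_{|j| <= N} f_{jq} e^{ijq theta}  of f^{(q)}(theta),
   written in real form: f_0 = (1/2pi) int_0^{2pi} f, and for k >= 1,
   f_k e^{ik theta} + f_{-k} e^{-ik theta}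
     = (1/pi) int_0^{2pi} f(t) cos(k (theta - t)) dt. *)
Fixpoint rsum (g : nat -> R) (N : nat) : R :=
  match N with
  | O => 0
  | S k => rsum g k + g k
  end.

Definition fourier_pair (f : R -> R) (k : nat) (theta : R) : R :=
  / PI * RInt (fun t => f t * cos (INR k * (theta - t))) 0 (2 * PI).

Definition fourier_q_partial (f : R -> R) (q : nat) (theta : R) (N : nat) : R :=
  / (2 * PI) * RInt f 0 (2 * PI)
  + rsum (fun j => fourier_pair f ((S j) * q)%nat theta) N.

Definition in_closed_region (rho : R -> R) (x y : R) : Prop :=
  exists r phi, 0 <= r <= rho phi /\ x = r * cos phi /\ y = r * sin phi.

Definition in_open_region (rho : R -> R) (x y : R) : Prop :=
  exists r phi, 0 <= r < rho phi /\ x = r * cos phi /\ y = r * sin phi.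

Definition strictly_convex (rho : R -> R) : Prop :=
  forall x1 y1 x2 y2 t,
    in_closed_region rho x1 y1 -> in_closed_region rho x2 y2 ->
    (x1 <> x2 \/ y1 <> y2) -> 0 < t < 1 ->
    in_open_region rho ((1 - t) * x1 + t * x2) ((1 - t) * y1 + t * y2).

Definition dist2 (x1 y1 x2 y2 : R) : R :=
  sqrt ((x1 - x2) ^ 2 + (y1 - y2) ^ 2).

Definition bx (rho : R -> R) (phi : R) : R := rho phi * cos phi.
Definition by_ (rho : R -> R) (phi : R) : R := rho phi * sin phi.

(* perimeter of the q-gon with vertices at polar angles phi 0, ..., phi q
   (phi q closes the polygon) *)
Definition perimeter (rho : R -> R) (q : nat) (phi : nat -> R) : R :=
  rsum (fun i => dist2 (bx rho (phi i)) (by_ rho (phi i))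
                       (bx rho (phi (S i))) (by_ rho (phi (S i)))) q.

(* admissible angle sequences: start at theta, counterclockwise, once around,
   end at theta + 2pi (i.e. back at the starting boundary point) *)
Definition admissible (q : nat) (theta : R) (phi : nat -> R) : Prop :=
  phi 0%nat = theta /\ phi q = theta + 2 * PI /\
  forall i, (i < q)%nat -> phi i <= phi (S i).

Definition perimeters (rho : R -> R) (q : nat) (theta : R) : R -> Prop :=
  fun p => exists phi, admissible q theta phi /\ p = perimeter rho q phi.

Definition Pq (rho : R -> R) (q : nat) (theta : R) : R :=
  epsilon (inhabits 0) (fun l => is_lub (perimeters rho q theta) l).

Definition unit_disk_rho : R -> R := fun _ => 1.

From Pilot Require Import Defs.
From Stdlib Require Import Reals Lra Lia ClassicalEpsilon.
From Coquelicot Require Import Coquelicot.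
Open Scope R_scope.

(* Let [a = PI / q].  The chord joining the boundary points at angles [phi] and
   [phi'] has length sqrt ((r - r')^2 + 4 r r' sin^2 ((phi' - phi) / 2)), which
   is [(r + r') sin ((phi' - phi) / 2) + O(e^2)] uniformly, because
   [r - r' = O(e |phi' - phi| + e^2)].  Hence the regular polygon with vertices
   at the angles [theta + 2 a i] has perimeter [2 q sin a (1 + e g(theta)) + O(e^2)],
   where [g(theta)] is the mean of [n] over these vertices.  No inscribed polygon
   does better by more than [O(e^2)]: if its half gaps are [a + eta_i] (so
   [sum eta_i = 0]), strong concavity of [sin] on [[0, PI]] costs [c eta_i^2] per
   side, which absorbs the first-order change [O(e |eta_i|)] due to moving the
   vertices.  Thus [P_q(theta, Omega_e) = 2 q sin a (1 + e g(theta)) + O(e^2)],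
   and the disk is the unperturbed case [n = 0].  Finally [g = n^(q)]: the Fourier
   coefficients of [g] are those of [n] at the multiples of [q] and vanish
   elsewhere, and the Fourier series of the C^1 periodic function [g] converges
   pointwise to [g] (Dirichlet kernel, Riemann-Lebesgue estimate by integration
   by parts). *)

(** * Trigonometric inequalities *)

Lemma sin_half_ge (u : R) : 0 <= u <= PI -> u / 8 <= sin (u / 2).
Proof.
  intros Hu. assert (HP := PI_4).
  destruct (sin_bound (u / 2) 0 ltac:(lra) ltac:(lra)) as [Hs _].
  replace (sin_approx (u / 2) (2 * 0 + 1)) with (u / 2 - (u / 2) ^ 3 / 6) in Hs
    by (unfold sin_approx, sin_term; simpl; field).
  nra.
Qed.

Lemma mul_sin_half_ge (t : R) : - PI <= t <= PI -> t ^ 2 / 8 <= t * sin (t / 2).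
Proof.
  intros Ht. destruct (Rle_dec 0 t) as [H0|H0].
  - assert (h := sin_half_ge t ltac:(lra)). nra.
  - assert (h := sin_half_ge (- t) ltac:(lra)).
    replace (- t / 2) with (- (t / 2)) in h by field. rewrite sin_neg in h. nra.
Qed.

Lemma sin_half_le_sin_half_add (a c : R) : 0 < a <= PI / 2 -> 0 <= c <= PI ->
  sin (a / 2) <= sin ((a + c) / 2).
Proof.
  intros Ha Hc. assert (HP := PI_RGT_0).
  assert (E := form4 ((a + c) / 2) (a / 2)).
  assert (0 <= cos (((a + c) / 2 + a / 2) / 2)) by (apply cos_ge_0; lra).
  assert (0 <= sin (((a + c) / 2 - a / 2) / 2)) by (apply sin_ge_0; lra).
  nra.
Qed.

Lemma cos_sub_mul_ge (a c : R) : 0 < a <= PI / 2 -> 0 <= c <= PI ->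
  sin (a / 2) / 4 * (c - a) ^ 2 <= (cos a - cos c) * (c - a).
Proof.
  intros Ha Hc. assert (HP := PI_RGT_0).
  assert (E := form2 a c).
  replace ((a - c) / 2) with (- ((c - a) / 2)) in E by field. rewrite sin_neg in E.
  assert (H1 := sin_half_le_sin_half_add a c Ha Hc).
  assert (H2 := mul_sin_half_ge (c - a) ltac:(lra)).
  assert (0 <= sin (a / 2)) by (apply sin_ge_0; lra).
  assert (0 <= (c - a) ^ 2) by apply pow2_ge_0.
  rewrite E. nra.
Qed.

Lemma sin_strong_concave (a x : R) : 0 < a <= PI / 2 -> 0 <= x <= PI ->
  sin x <= sin a + cos a * (x - a) - sin (a / 2) / 8 * (x - a) ^ 2.
Proof.
  intros Ha Hx.
  set (k := sin (a / 2) / 8).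
  set (g := fun y => sin a + cos a * (y - a) - k * (y - a) ^ 2 - sin y).
  set (dg := fun y => cos a - 2 * k * (y - a) - cos y).
  (* [g] vanishes at [a] and [g'(c) (c - a) >= 0]: [g] grows away from [a]. *)
  destruct (MVT_gen g a x dg) as [c [Hc Hgc]].
  - intros y _. unfold g, dg. auto_derive; auto. ring.
  - intros y _. apply derivable_continuous_pt. unfold g. reg.
  - assert (Hc' : 0 <= c <= PI /\ (c - a) * (x - a) >= 0).
    { destruct (Rle_dec a x).
      - rewrite Rmin_left, Rmax_right in Hc by lra. split; [lra | nra].
      - rewrite Rmin_right, Rmax_left in Hc by lra. split; [lra | nra]. }
    assert (Hdg : 0 <= dg c * (c - a)).
    { assert (h := cos_sub_mul_ge a c Ha (proj1 Hc')).
      unfold dg, k in *. assert (0 <= (c - a) ^ 2) by apply pow2_ge_0. nra. }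
    assert (0 <= dg c * (x - a)).
    { destruct (Req_dec c a) as [->|Hca]; [unfold dg; right; ring|].
      destruct Hc' as [_ Hs]. assert (0 < (c - a) ^ 2) by (apply pow2_gt_0; lra).
      nra. }
    unfold g in Hgc. lra.
Qed.

Lemma sin_lipschitz (x y : R) : Rabs (sin x - sin y) <= Rabs (x - y).
Proof.
  destruct (MVT_gen sin y x cos) as [c [_ Hc]].
  - intros z _. apply is_derive_sin.
  - intros z _. apply derivable_continuous_pt. reg.
  - rewrite Hc, Rabs_mult.
    assert (Rabs (cos c) <= 1) by (apply Rabs_le; split; apply COS_bound).
    assert (0 <= Rabs (x - y)) by apply Rabs_pos.
    nra.
Qed.

Lemma dist2_polar (rho : R -> R) (a b : R) :
  dist2 (bx rho a) (by_ rho a) (bx rho b) (by_ rho b) =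
  sqrt ((rho a - rho b) ^ 2 + 4 * rho a * rho b * sin ((b - a) / 2) ^ 2).
Proof.
  unfold dist2, bx, by_. f_equal.
  assert (E1 := cos_minus b a).
  assert (E2 := cos_2a_sin ((b - a) / 2)).
  replace (2 * ((b - a) / 2)) with (b - a) in E2 by field.
  assert (E3 := sin2_cos2 a). assert (E4 := sin2_cos2 b). unfold Rsqr in *.
  set (r := rho a) in *. set (s := rho b) in *.
  replace ((r * cos a - s * cos b) ^ 2 + (r * sin a - s * sin b) ^ 2) with
    (r ^ 2 * (sin a * sin a + cos a * cos a) + s ^ 2 * (sin b * sin b + cos b * cos b)
     - 2 * r * s * (cos b * cos a + sin b * sin a)) by ring.
  rewrite E3, E4, <- E1, E2. ring.
Qed.

Lemma chord_ge (r r' s : R) : 0 <= r -> 0 <= r' -> 0 <= s <= 1 ->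
  (r + r') * s <= sqrt ((r - r') ^ 2 + 4 * r * r' * s ^ 2).
Proof.
  intros Hr Hr' Hs. rewrite <- (sqrt_pow2 ((r + r') * s)) by nra.
  apply sqrt_le_1_alt.
  assert (s ^ 2 <= 1) by nra. assert (0 <= (r - r') ^ 2) by apply pow2_ge_0.
  nra.
Qed.

Lemma sqrt_add_sq_le (A Y B Q : R) : 0 <= B -> 0 <= Q -> Y <= B ^ 2 ->
  A ^ 2 <= 2 * B * Q + Q ^ 2 -> sqrt (A ^ 2 + Y) <= B + Q.
Proof.
  intros HB HQ HY HA. rewrite <- (sqrt_pow2 (B + Q)) by lra.
  apply sqrt_le_1_alt. nra.
Qed.

(* [A = r - r'] is only [O(e)], yet costs [O(e^2)] under the square root,
   since sqrt (B^2 + A^2) <= B + A^2 / (2 B) with [B = (r + r') s >= dl / 4]: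
   if [e <= dl] then [A^2 <= 4 K^2 e^2 dl^2 <= 64 K^2 e^2 B], and otherwise [A]
   itself is [O(e^2)]. *)
Lemma chord_le (A r r' s dl e K : R) :
  0 < e -> 0 <= dl <= 4 -> 1 <= r + r' -> 0 <= r -> 0 <= r' -> 0 <= s ->
  dl / 4 <= s -> 0 <= K -> Rabs A <= K * (e * dl + e ^ 2) ->
  sqrt (A ^ 2 + 4 * r * r' * s ^ 2) <= (r + r') * s + (2 * K + 32 * K ^ 2) * e ^ 2.
Proof.
  intros He Hdl Hrr Hr Hr' Hs Hsd HK HA.
  set (B := (r + r') * s). set (Q := (2 * K + 32 * K ^ 2) * e ^ 2).
  assert (HB : dl / 4 <= B) by (unfold B; nra).
  assert (HKe : 0 <= K * e ^ 2) by (apply Rmult_le_pos; [lra | apply pow2_ge_0]).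
  assert (HK2e : 0 <= K ^ 2 * e ^ 2) by (apply Rmult_le_pos; apply pow2_ge_0).
  assert (HQ : 0 <= Q) by (unfold Q; nra).
  assert (HA2 : A ^ 2 = Rabs A ^ 2) by (rewrite <- !Rsqr_pow2; apply Rsqr_abs).
  assert (HA0 := Rabs_pos A).
  assert (0 <= (r - r') ^ 2 * s ^ 2) by (apply Rmult_le_pos; apply pow2_ge_0).
  apply sqrt_add_sq_le; [unfold B; nra | exact HQ | unfold B; nra |].
  rewrite HA2. destruct (Rle_dec e dl) as [Hed|Hed].
  - assert (Rabs A <= 2 * K * e * dl) by nra.
    assert (Rabs A ^ 2 <= (2 * K * e * dl) ^ 2) by (apply pow_incr; lra).
    assert (dl * dl <= 16 * B) by nra.
    assert (K ^ 2 * e ^ 2 * (dl * dl) <= K ^ 2 * e ^ 2 * (16 * B))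
      by (apply Rmult_le_compat_l; lra).
    assert (0 <= Q ^ 2) by apply pow2_ge_0.
    unfold Q in *. nra.
  - assert (Rabs A <= 2 * K * e ^ 2) by nra.
    assert (0 <= 2 * B * Q) by nra.
    assert (Rabs A ^ 2 <= (2 * K * e ^ 2) ^ 2) by (apply pow_incr; lra).
    assert ((2 * K * e ^ 2) ^ 2 <= Q ^ 2) by (apply pow_incr; unfold Q; nra).
    lra.
Qed.

Lemma rsum_ext (f g : nat -> R) N :
  (forall i, (i < N)%nat -> f i = g i) -> rsum f N = rsum g N.
Proof.
  induction N; intros H; simpl; auto.
  rewrite IHN by (intros; apply H; lia). rewrite H by lia. reflexivity.
Qed.

Lemma rsum_le (f g : nat -> R) N :
  (forall i, (i < N)%nat -> f i <= g i) -> rsum f N <= rsum g N.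
Proof.
  induction N; intros H; simpl; [lra|].
  assert (rsum f N <= rsum g N) by (apply IHN; intros; apply H; lia).
  assert (f N <= g N) by (apply H; lia). lra.
Qed.

Lemma rsum_plus (f g : nat -> R) N : rsum (fun i => f i + g i) N = rsum f N + rsum g N.
Proof. induction N; simpl; [lra|]. rewrite IHN. ring. Qed.

Lemma rsum_minus (f g : nat -> R) N : rsum (fun i => f i - g i) N = rsum f N - rsum g N.
Proof. induction N; simpl; [lra|]. rewrite IHN. ring. Qed.

Lemma rsum_scal (c : R) (f : nat -> R) N : rsum (fun i => c * f i) N = c * rsum f N.
Proof. induction N; simpl; [lra|]. rewrite IHN. ring. Qed.

Lemma rsum_const (c : R) N : rsum (fun _ => c) N = INR N * c.
Proof. induction N; simpl rsum; [simpl; lra|]. rewrite IHN, S_INR. ring. Qed.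

Lemma rsum_shift (f : nat -> R) N : rsum (fun i => f (S i)) N = rsum f N - f 0%nat + f N.
Proof. induction N; simpl; [lra|]. rewrite IHN. ring. Qed.

Lemma rsum_telescope (f : nat -> R) N : rsum (fun i => f (S i) - f i) N = f N - f 0%nat.
Proof. induction N; simpl; [lra|]. rewrite IHN. ring. Qed.

Lemma rsum_split (f : nat -> R) a b :
  rsum f (a + b) = rsum f a + rsum (fun l => f (a + l)%nat) b.
Proof.
  induction b; simpl; [rewrite Nat.add_0_r; ring|].
  rewrite Nat.add_succ_r. simpl. rewrite IHb. ring.
Qed.

Lemma rsum_abs (f : nat -> R) N : Rabs (rsum f N) <= rsum (fun i => Rabs (f i)) N.
Proof.
  induction N; simpl; [rewrite Rabs_R0; lra|].
  eapply Rle_trans; [apply Rabs_triang | lra].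
Qed.

Lemma rsum_le_of_nonneg (f : nat -> R) N M :
  (forall j, (j < N)%nat -> 0 <= f j) -> (M <= N)%nat -> rsum f M <= rsum f N.
Proof.
  induction N; intros H HM.
  - replace M with 0%nat by lia. simpl; lra.
  - destruct (Nat.eq_dec M (S N)) as [->|]; [lra|].
    simpl. assert (rsum f M <= rsum f N) by (apply IHN; [intros; apply H | ]; lia).
    assert (0 <= f N) by (apply H; lia). lra.
Qed.

Lemma rsum_term_le (f : nat -> R) N i :
  (forall j, (j < N)%nat -> 0 <= f j) -> (i < N)%nat -> f i <= rsum f N.
Proof.
  intros H Hi. apply Rle_trans with (rsum f (S i)).
  - simpl. assert (0 <= rsum f i) by (replace 0 with (rsum f 0) by reflexivity;
      apply rsum_le_of_nonneg; [intros; apply H | ]; lia). lra.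
  - apply rsum_le_of_nonneg; auto.
Qed.

(** * Inscribed polygons *)

Lemma Pq_is_lub (rho : R -> R) q theta :
  (exists p, perimeters rho q theta p) ->
  (exists U, forall p, perimeters rho q theta p -> p <= U) ->
  is_lub (perimeters rho q theta) (Pq rho q theta).
Proof.
  intros Hne [U HU]. unfold Pq. apply epsilon_spec.
  destruct (completeness (perimeters rho q theta)) as [l Hl]; [exists U; exact HU | exact Hne |].
  exists l; exact Hl.
Qed.

Definition vertex_angle (q i : nat) : R := 2 * (PI / INR q) * INR i.

Definition regular_angles (q : nat) (theta : R) (i : nat) : R := theta + vertex_angle q i.

Definition rotation_average (f : R -> R) (q : nat) (theta : R) : R :=
  / INR q * rsum (fun i => f (regular_angles q theta i)) q.

Lemma regular_angles_admissible q theta : (1 <= q)%nat -> admissible q theta (regular_angles q theta).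
Proof.
  intros Hq. assert (HP := PI_RGT_0). assert (0 < INR q) by (apply lt_0_INR; lia).
  assert (0 <= PI / INR q) by (apply Rlt_le, Rdiv_lt_0_compat; lra).
  unfold admissible, regular_angles, vertex_angle. repeat split.
  - simpl. ring.
  - field. lra.
  - intros i _. rewrite S_INR. lra.
Qed.

Lemma Pq_le_ub (rho : R -> R) q theta U :
  (1 <= q)%nat -> (forall p, perimeters rho q theta p -> p <= U) -> Pq rho q theta <= U.
Proof.
  intros Hq HU. apply (Pq_is_lub rho q theta); [|exists U; exact HU | exact HU].
  exists (perimeter rho q (regular_angles q theta)), (regular_angles q theta).
  split; [apply regular_angles_admissible|]; auto.
Qed.

Lemma perimeter_le_Pq (rho : R -> R) q theta U phi :
  admissible q theta phi -> (forall p, perimeters rho q theta p -> p <= U) ->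
  perimeter rho q phi <= Pq rho q theta.
Proof.
  intros Ha HU. apply (Pq_is_lub rho q theta); [|exists U; exact HU | exists phi; auto].
  exists (perimeter rho q phi), phi. auto.
Qed.

Definition gap (phi : nat -> R) (i : nat) : R := phi (S i) - phi i.

Lemma admissible_gap_sum q theta phi : admissible q theta phi -> rsum (gap phi) q = 2 * PI.
Proof. intros [H0 [Hq _]]. unfold gap. rewrite rsum_telescope, H0, Hq. ring. Qed.

Lemma admissible_gap_bounds q theta phi i : admissible q theta phi -> (i < q)%nat ->
  0 <= gap phi i <= 2 * PI.
Proof.
  intros Ha Hi. assert (Hmono : forall j, (j < q)%nat -> 0 <= gap phi j).
  { intros j Hj. destruct Ha as [_ [_ Hm]]. unfold gap. assert (h := Hm j Hj). lra. }
  split; auto. rewrite <- (admissible_gap_sum q theta phi Ha). apply rsum_term_le; auto.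
Qed.

Definition gap_excess (q : nat) (phi : nat -> R) (i : nat) : R := gap phi i / 2 - PI / INR q.

Lemma gap_excess_sum q theta phi : (1 <= q)%nat -> admissible q theta phi ->
  rsum (gap_excess q phi) q = 0.
Proof.
  intros Hq Ha. assert (0 < INR q) by (apply lt_0_INR; lia).
  unfold gap_excess. rewrite rsum_minus, rsum_const.
  rewrite (rsum_ext _ (fun i => / 2 * gap phi i)) by (intros; unfold Rdiv; ring).
  rewrite rsum_scal, (admissible_gap_sum q theta phi Ha). field. lra.
Qed.

Lemma angle_deviation_le q theta phi i : (1 <= q)%nat -> admissible q theta phi -> (i <= q)%nat ->
  Rabs (phi i - regular_angles q theta i) <= 2 * rsum (fun j => Rabs (gap_excess q phi j)) q.
Proof.
  intros Hq Ha Hi. assert (0 < INR q) by (apply lt_0_INR; lia).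
  assert (E : phi i - regular_angles q theta i = rsum (fun j => 2 * gap_excess q phi j) i).
  { clear Hi. induction i.
    - destruct Ha as [H0 _]. rewrite H0. unfold regular_angles, vertex_angle. simpl. ring.
    - simpl rsum. rewrite <- IHi.
      unfold gap_excess, gap, regular_angles, vertex_angle. rewrite S_INR. field. lra. }
  rewrite E, <- rsum_scal. eapply Rle_trans; [apply rsum_abs|].
  apply Rle_trans with (rsum (fun j => 2 * Rabs (gap_excess q phi j)) i).
  - right. apply rsum_ext. intros. rewrite Rabs_mult, (Rabs_right 2) by lra. reflexivity.
  - apply rsum_le_of_nonneg; auto. intros. assert (h := Rabs_pos (gap_excess q phi j)). lra.
Qed.

Lemma pi_div_INR_bounds (q : nat) : (2 <= q)%nat -> 0 < PI / INR q <= PI / 2 /\ 2 <= INR q.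
Proof.
  intros Hq. assert (HP := PI_RGT_0).
  assert (Hq0 : 2 <= INR q) by (replace 2 with (INR 2) by (simpl; lra); apply le_INR; lia).
  split; auto. split; [apply Rdiv_lt_0_compat; lra|].
  apply Rmult_le_compat_l; [lra | apply Rinv_le_contravar; lra].
Qed.

Lemma regular_gap q theta i : (1 <= q)%nat -> gap (regular_angles q theta) i / 2 = PI / INR q.
Proof.
  intros Hq. assert (0 < INR q) by (apply lt_0_INR; lia).
  unfold gap, regular_angles, vertex_angle. rewrite S_INR. field. lra.
Qed.

Lemma rsum_regular_shift (f : R -> R) q theta : (1 <= q)%nat -> periodic2pi f ->
  rsum (fun i => f (regular_angles q theta (S i))) q = rsum (fun i => f (regular_angles q theta i)) q.
Proof.
  intros Hq Hf. assert (0 < INR q) by (apply lt_0_INR; lia).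
  rewrite (rsum_shift (fun i => f (regular_angles q theta i))).
  replace (regular_angles q theta q) with (regular_angles q theta 0 + 2 * PI)
    by (unfold regular_angles, vertex_angle; simpl; field; lra).
  rewrite Hf. ring.
Qed.

(** * Perimeters in a perturbed disk *)

Lemma first_order_term_le (n1 n2 m1 m2 x a D N0 : R) :
  Rabs (n1 - m1) <= D -> Rabs (n2 - m2) <= D ->
  Rabs m1 <= N0 -> Rabs m2 <= N0 ->
  (n1 + n2) * sin x <= (m1 + m2) * sin a + 2 * D + 2 * N0 * Rabs (x - a).
Proof.
  intros H1 H2 H3 H4.
  assert (Hs : Rabs (sin x) <= 1) by (apply Rabs_le; split; apply SIN_bound).
  assert (B1 : Rabs ((n1 - m1) * sin x) <= D).
  { rewrite Rabs_mult. assert (h := Rabs_pos (n1 - m1)). assert (h' := Rabs_pos (sin x)). nra. }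
  assert (B2 : Rabs ((n2 - m2) * sin x) <= D).
  { rewrite Rabs_mult. assert (h := Rabs_pos (n2 - m2)). assert (h' := Rabs_pos (sin x)). nra. }
  assert (B3 : Rabs ((m1 + m2) * (sin x - sin a)) <= 2 * N0 * Rabs (x - a)).
  { rewrite Rabs_mult. apply Rmult_le_compat; try apply Rabs_pos; [|apply sin_lipschitz].
    eapply Rle_trans; [apply Rabs_triang | lra]. }
  apply Rabs_le_between in B1, B2, B3. nra.
Qed.

Lemma concave_quadratic_le (b c x : R) : 0 < c -> b * x - c * x ^ 2 <= b ^ 2 / (4 * c).
Proof.
  intros Hc. assert (0 <= (2 * c * x - b) ^ 2) by apply pow2_ge_0.
  apply (Rmult_le_reg_r (4 * c)); [lra|].
  replace (b ^ 2 / (4 * c) * (4 * c)) with (b ^ 2) by (field; lra). nra.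
Qed.

Definition chord_error (L W : R) : R := 4 * (L + 2 * W) + 128 * (L + 2 * W) ^ 2.

Definition Pq_error (q : nat) (N0 L W : R) : R :=
  INR q * (chord_error L W + 2 * W + (2 * N0 + 4 * INR q * L) ^ 2 / sin (PI / INR q / 2)).

Lemma Pq_error_ge (q : nat) (N0 L W : R) : (2 <= q)%nat -> 0 <= L -> 0 <= W ->
  2 * INR q * W <= Pq_error q N0 L W.
Proof.
  intros Hq HL HW. destruct (pi_div_INR_bounds q Hq) as [Ha Hq2].
  assert (0 < sin (PI / INR q / 2)) by (apply sin_gt_0; lra).
  assert (0 <= (2 * N0 + 4 * INR q * L) ^ 2 / sin (PI / INR q / 2))
    by (apply Rdiv_le_0_compat; [apply pow2_ge_0 | lra]).
  assert (0 <= chord_error L W) by (unfold chord_error; nra).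
  unfold Pq_error. nra.
Qed.

Section PerturbedDisk.

Variables (r n : R -> R) (e N0 L W : R) (q : nat).
Hypothesis Hq : (2 <= q)%nat.
Hypothesis He : 0 < e.
Hypothesis HL : 0 <= L.
Hypothesis HW : 0 <= W.
Hypothesis Hn_per : periodic2pi n.
Hypothesis Hn_bound : forall t, Rabs (n t) <= N0.
Hypothesis Hn_lip : forall s t, Rabs (n s - n t) <= L * Rabs (s - t).
Hypothesis Hr_approx : forall t, Rabs (r t - (1 + e * n t)) <= W * e ^ 2.
Hypothesis Hr_half : forall t, 1 / 2 <= r t.
Hypothesis Hr_per : periodic2pi r.

(* [dl] is half the distance between the angles [a] and [b] modulo [2 PI]. *)
Lemma angular_distance_bounds (a b : R) : 0 <= b - a <= 2 * PI ->
  exists dl, 0 <= dl <= 4 /\ dl / 4 <= sin ((b - a) / 2) /\ Rabs (n a - n b) <= 2 * L * dl.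
Proof.
  intros Hab. assert (HP := PI_RGT_0). assert (HP4 := PI_4).
  destruct (Rle_dec (b - a) PI).
  - exists ((b - a) / 2). assert (h := sin_half_ge (b - a) ltac:(lra)).
    assert (h' := Hn_lip a b).
    replace (a - b) with (- (b - a)) in h' by ring. rewrite Rabs_Ropp, (Rabs_right (b - a)) in h' by lra.
    repeat split; lra.
  - exists ((2 * PI - (b - a)) / 2).
    assert (h := sin_half_ge (2 * PI - (b - a)) ltac:(lra)).
    replace ((2 * PI - (b - a)) / 2) with (PI - (b - a) / 2) in h by field.
    rewrite sin_PI_x in h.
    assert (h' := Hn_lip a (b - 2 * PI)).
    replace (b - 2 * PI) with (b + - (2 * PI)) in h' by ring.
    rewrite <- (Hn_per (b + - (2 * PI))) in h'.
    replace (b + - (2 * PI) + 2 * PI) with b in h' by ring.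
    replace (a - (b + - (2 * PI))) with (2 * PI - (b - a)) in h' by ring.
    rewrite (Rabs_right (2 * PI - (b - a))) in h' by lra.
    repeat split; lra.
Qed.

Lemma chord_le_sin_half (a b : R) : 0 <= b - a <= 2 * PI ->
  dist2 (bx r a) (by_ r a) (bx r b) (by_ r b) <=
  (r a + r b) * sin ((b - a) / 2) + chord_error L W * e ^ 2.
Proof.
  intros Hab. destruct (angular_distance_bounds a b Hab) as [dl [Hdl [Hs Hn]]].
  assert (Ha := Hr_approx a). assert (Hb := Hr_approx b).
  assert (Hdiff : Rabs (r a - r b) <= 2 * (L + 2 * W) * (e * dl + e ^ 2)).
  { assert (Hen : Rabs (e * (n a - n b)) <= e * (2 * L * dl))
      by (rewrite Rabs_mult, Rabs_right by lra; apply Rmult_le_compat_l; lra).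
    apply Rabs_le_between in Ha, Hb, Hen. apply Rabs_le.
    assert (0 <= W * (e * dl)) by (apply Rmult_le_pos; nra).
    assert (0 <= L * e ^ 2) by (apply Rmult_le_pos; nra).
    split; nra. }
  rewrite dist2_polar.
  eapply Rle_trans.
  - apply (chord_le _ _ _ _ dl e (2 * (L + 2 * W))); auto; try lra.
    + assert (h1 := Hr_half a). assert (h2 := Hr_half b). lra.
    + assert (h1 := Hr_half a). lra.
    + assert (h1 := Hr_half b). lra.
  - unfold chord_error. right. ring.
Qed.

Lemma chord_le_first_order (a b : R) : 0 <= b - a <= 2 * PI ->
  dist2 (bx r a) (by_ r a) (bx r b) (by_ r b) <=
  (2 + e * (n a + n b)) * sin ((b - a) / 2) + (chord_error L W + 2 * W) * e ^ 2.
Proof.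
  intros Hab. eapply Rle_trans; [apply chord_le_sin_half; auto|].
  assert (Hs0 : 0 <= sin ((b - a) / 2)) by (apply sin_ge_0; lra).
  assert (Hs1 := SIN_bound ((b - a) / 2)).
  assert (Ha := Hr_approx a). assert (Hb := Hr_approx b).
  apply Rabs_le_between in Ha, Hb.
  assert ((r a + r b) * sin ((b - a) / 2) <=
          (2 + e * (n a + n b) + 2 * W * e ^ 2) * sin ((b - a) / 2))
    by (apply Rmult_le_compat_r; lra).
  assert (0 <= W * e ^ 2) by (apply Rmult_le_pos; [lra | apply pow2_ge_0]).
  nra.
Qed.

(* Each chord is compared with the tangent line of [sin] at the regular half
   gap [PI / q].  With [eta = gap_excess q phi i], strong concavity gains
   [sin (PI / (2 q)) / 4 * eta^2], which absorbs (AM-GM) the first-order error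
   [e * |eta|] due to the displacement of the vertices from the regular polygon.
   The terms linear in [eta] and the term [4 e L (sum_j |eta_j| - q |eta|)]
   vanish when summed over the polygon. *)
Lemma polygon_chord_le theta phi i : admissible q theta phi -> (i < q)%nat ->
  dist2 (bx r (phi i)) (by_ r (phi i)) (bx r (phi (S i))) (by_ r (phi (S i))) <=
  2 * sin (PI / INR q) + 2 * cos (PI / INR q) * gap_excess q phi i
  + e * sin (PI / INR q) * (n (regular_angles q theta i) + n (regular_angles q theta (S i)))
  + 4 * e * L * (rsum (fun j => Rabs (gap_excess q phi j)) q - INR q * Rabs (gap_excess q phi i))
  + Pq_error q N0 L W / INR q * e ^ 2.
Proof.
  intros Hadm Hi. destruct (pi_div_INR_bounds q Hq) as [Ha Hq2].
  assert (Hsa : 0 < sin (PI / INR q / 2)) by (apply sin_gt_0; lra).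
  assert (Hg := admissible_gap_bounds q theta phi i Hadm Hi).
  assert (Err : Pq_error q N0 L W / INR q = chord_error L W + 2 * W
                  + (2 * N0 + 4 * INR q * L) ^ 2 / sin (PI / INR q / 2))
    by (unfold Pq_error; field; lra).
  rewrite Err.
  set (a := PI / INR q) in *. set (eta := gap_excess q phi i).
  set (H := rsum (fun j => Rabs (gap_excess q phi j)) q).
  set (m := fun j => n (regular_angles q theta j)).
  set (x := gap phi i / 2).
  assert (Hx : 0 <= x <= PI) by (unfold x; lra).
  assert (Hxa : x - a = eta) by reflexivity.
  assert (Hdev : forall j, (j <= q)%nat -> Rabs (n (phi j) - m j) <= 2 * L * H).
  { intros j Hj. eapply Rle_trans; [apply Hn_lip|].
    assert (h := angle_deviation_le q theta phi j ltac:(lia) Hadm Hj). fold H in h.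
    replace (2 * L * H) with (L * (2 * H)) by ring. apply Rmult_le_compat_l; auto. }
  assert (C1 := chord_le_first_order (phi i) (phi (S i)) Hg).
  change (sin ((phi (S i) - phi i) / 2)) with (sin x) in C1.
  assert (C2 := sin_strong_concave a x Ha Hx).
  assert (C3 := first_order_term_le (n (phi i)) (n (phi (S i))) (m i) (m (S i)) x a
                  (2 * L * H) N0 (Hdev i ltac:(lia)) (Hdev (S i) ltac:(lia))
                  (Hn_bound _) (Hn_bound _)).
  assert (C4 := concave_quadratic_le (e * (2 * N0 + 4 * INR q * L)) (sin (a / 2) / 4)
                  (Rabs eta) ltac:(lra)).
  rewrite Hxa in C2, C3. rewrite pow2_abs in C4.
  replace ((e * (2 * N0 + 4 * INR q * L)) ^ 2 / (4 * (sin (a / 2) / 4)))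
    with ((2 * N0 + 4 * INR q * L) ^ 2 / sin (a / 2) * e ^ 2) in C4 by (field; lra).
  assert (e * ((n (phi i) + n (phi (S i))) * sin x) <=
          e * ((m i + m (S i)) * sin a + 2 * (2 * L * H) + 2 * N0 * Rabs eta))
    by (apply Rmult_le_compat_l; lra).
  fold (m i) (m (S i)). lra.
Qed.

Lemma perimeter_le theta phi : admissible q theta phi ->
  perimeter r q phi <=
  2 * INR q * sin (PI / INR q) * (1 + e * rotation_average n q theta) + Pq_error q N0 L W * e ^ 2.
Proof.
  intros Hadm. destruct (pi_div_INR_bounds q Hq) as [Ha Hq2].
  unfold perimeter. eapply Rle_trans; [apply rsum_le; intros i Hi; apply (polygon_chord_le theta phi i Hadm Hi)|].
  rewrite !rsum_plus, !rsum_scal, rsum_minus, !rsum_const, rsum_scal, rsum_plus.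
  rewrite (gap_excess_sum q theta phi ltac:(lia) Hadm), (rsum_regular_shift n) by (auto; lia).
  unfold rotation_average. right. field. lra.
Qed.

Lemma perimeter_regular_ge theta :
  2 * INR q * sin (PI / INR q) * (1 + e * rotation_average n q theta) - Pq_error q N0 L W * e ^ 2
  <= perimeter r q (regular_angles q theta).
Proof.
  destruct (pi_div_INR_bounds q Hq) as [Ha Hq2].
  assert (HS0 : 0 <= sin (PI / INR q)) by (apply sin_ge_0; lra).
  assert (HS1 := SIN_bound (PI / INR q)).
  assert (Herr := Pq_error_ge q N0 L W Hq HL HW).
  set (rr := fun i => r (regular_angles q theta i)).
  apply Rle_trans with (rsum (fun i => sin (PI / INR q) * (rr i + rr (S i))) q).
  - rewrite rsum_scal, rsum_plus. unfold rr. rewrite (rsum_regular_shift r) by (auto; lia).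
    fold rr.
    assert (Hs : rsum (fun i => 1 + e * n (regular_angles q theta i) - W * e ^ 2) q <= rsum rr q).
    { apply rsum_le. intros i _. unfold rr. assert (h := Hr_approx (regular_angles q theta i)).
      apply Rabs_le_between in h. lra. }
    rewrite rsum_minus, rsum_plus, !rsum_const, rsum_scal in Hs.
    assert (0 <= INR q * W * e ^ 2) by (apply Rmult_le_pos; [nra | apply pow2_ge_0]).
    unfold rotation_average. fold rr.
    replace (2 * INR q * sin (PI / INR q) * (1 + e * (/ INR q * rsum (fun i => n (regular_angles q theta i)) q)))
      with (2 * sin (PI / INR q) * (INR q * 1 + e * rsum (fun i => n (regular_angles q theta i)) q))
      by (field; lra).
    nra.
  - unfold perimeter. apply rsum_le. intros i Hi.
    rewrite dist2_polar. fold (gap (regular_angles q theta) i).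
    rewrite regular_gap by lia. unfold rr. rewrite Rmult_comm.
    apply chord_ge; try lra; apply Rle_trans with (1 / 2); auto; lra.
Qed.

Lemma Pq_expansion theta :
  Rabs (Pq r q theta - 2 * INR q * sin (PI / INR q) * (1 + e * rotation_average n q theta))
  <= Pq_error q N0 L W * e ^ 2.
Proof.
  assert (Hup : forall p, perimeters r q theta p ->
    p <= 2 * INR q * sin (PI / INR q) * (1 + e * rotation_average n q theta) + Pq_error q N0 L W * e ^ 2).
  { intros p [phi [Hadm ->]]. apply perimeter_le; auto. }
  assert (P1 := Pq_le_ub r q theta _ ltac:(lia) Hup).
  assert (P2 := perimeter_le_Pq r q theta _ _ (regular_angles_admissible q theta ltac:(lia)) Hup).
  assert (P3 := perimeter_regular_ge theta).
  apply Rabs_le. lra.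
Qed.
End PerturbedDisk.

(* The case [e = 1], [n = 0], [N0 = L = W = 0] of [Pq_expansion], whose error vanishes. *)
Lemma Pq_unit_disk q theta : (2 <= q)%nat ->
  Pq unit_disk_rho q theta = 2 * INR q * sin (PI / INR q).
Proof.
  intros Hq.
  assert (Hexp := Pq_expansion unit_disk_rho (fun _ => 0) 1 0 0 0 q Hq ltac:(lra) ltac:(lra) ltac:(lra)
    (fun _ => eq_refl) ltac:(intros; cbv beta; rewrite Rabs_R0; lra)
    ltac:(intros; cbv beta; rewrite Rminus_0_r, Rabs_R0; lra)
    ltac:(intros; unfold unit_disk_rho; rewrite Rmult_0_r, Rplus_0_r, Rminus_diag, Rabs_R0; lra)
    ltac:(intros; unfold unit_disk_rho; lra) (fun _ => eq_refl) theta).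
  unfold Pq_error, chord_error, rotation_average in Hexp. rewrite rsum_const in Hexp.
  replace (INR q * (4 * (0 + 2 * 0) + 128 * (0 + 2 * 0) ^ 2 + 2 * 0
           + (2 * 0 + 4 * INR q * 0) ^ 2 / sin (PI / INR q / 2)) * 1 ^ 2) with 0 in Hexp
    by (unfold Rdiv; ring).
  apply Rabs_le_between in Hexp. lra.
Qed.

Lemma radius_first_order (r n m : R -> R) (e C M0 : R) :
  0 < e <= 1 -> (forall t, Rabs (m t) <= M0) ->
  (forall t, Rabs (r t - (1 + e * n t + e ^ 2 * m t)) <= C * e ^ 3) ->
  forall t, Rabs (r t - (1 + e * n t)) <= (M0 + Rabs C) * e ^ 2.
Proof.
  intros He Hm Hr t.
  replace (r t - (1 + e * n t)) with ((r t - (1 + e * n t + e ^ 2 * m t)) + e ^ 2 * m t) by ring.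
  eapply Rle_trans; [apply Rabs_triang|]. rewrite Rabs_mult, (Rabs_right (e ^ 2)) by nra.
  assert (h := Hr t). assert (hm := Hm t). assert (hC := Rle_abs C). assert (hC0 := Rabs_pos C).
  assert (e ^ 3 <= e ^ 2) by (simpl; nra).
  assert (0 <= e ^ 3) by (apply pow_le; lra).
  assert (C * e ^ 3 <= Rabs C * e ^ 3) by (apply Rmult_le_compat_r; lra).
  assert (Rabs C * e ^ 3 <= Rabs C * e ^ 2) by (apply Rmult_le_compat_l; lra).
  assert (e ^ 2 * Rabs (m t) <= e ^ 2 * M0) by (apply Rmult_le_compat_l; [apply pow2_ge_0 | lra]).
  lra.
Qed.

Lemma radius_ge_half (r n : R -> R) (e N0 W : R) :
  0 < e <= 1 -> 0 <= W -> e * (N0 + W) <= 1 / 2 -> (forall t, Rabs (n t) <= N0) ->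
  (forall t, Rabs (r t - (1 + e * n t)) <= W * e ^ 2) -> forall t, 1 / 2 <= r t.
Proof.
  intros He HW Hsmall Hn Hr t.
  assert (h := Hr t). assert (hn := Hn t). apply Rabs_le_between in h, hn.
  assert (W * e ^ 2 <= W * e) by (apply Rmult_le_compat_l; simpl; nra).
  nra.
Qed.

Lemma radius_expansion_first_order (rho : R -> R -> R) (n m : R -> R) (N0 M0 : R) :
  (forall t, Rabs (n t) <= N0) -> (forall t, Rabs (m t) <= M0) ->
  (exists C d, 0 < d /\ forall e t, 0 < e < d ->
     Rabs (rho e t - (1 + e * n t + e ^ 2 * m t)) <= C * e ^ 3) ->
  exists W d, 0 <= W /\ 0 < d /\ forall e, 0 < e < d ->
    (forall t, Rabs (rho e t - (1 + e * n t)) <= W * e ^ 2) /\ (forall t, 1 / 2 <= rho e t).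
Proof.
  intros HN HM [C [d0 [Hd0 Hexp]]].
  set (W := M0 + Rabs C).
  assert (HW : 0 <= W)
    by (assert (h := Rle_trans _ _ _ (Rabs_pos (m 0)) (HM 0)); assert (h' := Rabs_pos C); unfold W; lra).
  assert (HK : 1 <= N0 + W + 1) by (assert (h := Rle_trans _ _ _ (Rabs_pos (n 0)) (HN 0)); lra).
  set (d := Rmin d0 (/ (2 * (N0 + W + 1)))).
  exists W, d. split; [exact HW|]. split; [apply Rmin_pos; [lra | apply Rinv_0_lt_compat; lra]|].
  intros e He.
  assert (h1 := Rmin_l d0 (/ (2 * (N0 + W + 1)))). assert (h2 := Rmin_r d0 (/ (2 * (N0 + W + 1)))).
  fold d in h1, h2.
  assert (e * (2 * (N0 + W + 1)) <= 1).
  { apply Rle_trans with (/ (2 * (N0 + W + 1)) * (2 * (N0 + W + 1))); [|right; field; lra].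
    apply Rmult_le_compat_r; lra. }
  assert (Hr := radius_first_order (rho e) n m e C M0 ltac:(nra) HM (fun t => Hexp e t ltac:(lra))).
  split; [exact Hr|]. apply (radius_ge_half (rho e) n e N0 W); auto; nra.
Qed.

(* Instances at [R -> R] of Coquelicot's generic continuity lemmas, stated
   with [Rmult], [Rplus], ... so that [apply] can match them. *)
Lemma continuous_Rmult (f g : R -> R) x :
  continuous f x -> continuous g x -> continuous (fun y => f y * g y) x.
Proof. intros. apply (continuous_mult f g); auto. Qed.
Lemma continuous_Rplus (f g : R -> R) x :
  continuous f x -> continuous g x -> continuous (fun y => f y + g y) x.
Proof. intros. apply (continuous_plus f g); auto. Qed.
Lemma continuous_Ropp (f : R -> R) x : continuous f x -> continuous (fun y => - f y) x.
Proof. intros. apply (continuous_opp f); auto. Qed.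
Lemma continuous_Rminus (f g : R -> R) x :
  continuous f x -> continuous g x -> continuous (fun y => f y - g y) x.
Proof. intros. apply (continuous_minus f g); auto. Qed.
Lemma continuous_Rconst (c x : R) : continuous (fun _ : R => c) x.
Proof. apply continuous_const. Qed.
Lemma continuous_Rid x : continuous (fun y : R => y) x.
Proof. apply continuous_id. Qed.
Lemma continuous_Rcomp (f g : R -> R) x :
  continuous f x -> continuous g (f x) -> continuous (fun y => g (f y)) x.
Proof. intros. apply (continuous_comp f g); auto. Qed.
Lemma continuous_of_ex_derive (f : R -> R) x : ex_derive f x -> continuous f x.
Proof. apply (@ex_derive_continuous R_AbsRing R_NormedModule). Qed.

Ltac cont_step := match goal with
  | |- continuous (fun _ => ?c) _ => apply continuous_Rconst
  | |- continuous (fun y => y) _ => apply continuous_Rid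
  | |- continuous (fun y => sin (@?f y)) _ => apply (continuous_Rcomp f sin); [|apply continuous_sin]
  | |- continuous (fun y => cos (@?f y)) _ => apply (continuous_Rcomp f cos); [|apply continuous_cos]
  | |- continuous (fun y => @?f y * @?g y) _ => apply (continuous_Rmult f g)
  | |- continuous (fun y => @?f y / @?g y) _ => apply (continuous_Rmult f (fun y => / g y))
  | |- continuous (fun y => @?f y + @?g y) _ => apply (continuous_Rplus f g)
  | |- continuous (fun y => @?f y - @?g y) _ => apply (continuous_Rminus f g)
  | |- continuous (fun y => - @?f y) _ => apply (continuous_Ropp f)
  | |- continuous sin _ => apply continuous_sin
  | |- continuous cos _ => apply continuous_cos
  | |- continuous (Rmult ?c) _ => apply (continuous_Rmult (fun _ => c) (fun y => y))
  | |- continuous (Rplus ?c) _ => apply (continuous_Rplus (fun _ => c) (fun y => y))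
  | |- continuous (Rminus ?c) _ => apply (continuous_Rminus (fun _ => c) (fun y => y))
  | |- continuous (fun y => ?g (@?f y)) _ => is_var g; apply (continuous_Rcomp f g)
  end; cbv beta.
Ltac cont := repeat cont_step.

Lemma is_derive_shift (f : R -> R) (c x df : R) :
  is_derive f (x + c) df -> is_derive (fun t => f (t + c)) x df.
Proof.
  intros H. assert (h := is_derive_comp f (fun t => t + c) x df 1 H ltac:(auto_derive; auto)).
  unfold scal in h. simpl in h. unfold mult in h. simpl in h. rewrite Rmult_1_l in h. exact h.
Qed.

Lemma is_derive_reflect (f : R -> R) (c x df : R) :
  is_derive f (c - x) df -> is_derive (fun t => f (c - t)) x (- df).
Proof.
  intros H. assert (h := is_derive_comp f (fun t => c - t) x df (-1) H ltac:(auto_derive; auto; ring)).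
  unfold scal in h. simpl in h. unfold mult in h. simpl in h.
  replace (- df) with (-1 * df) by ring. exact h.
Qed.

Lemma locally_Rabs (x eps : R) (P : R -> Prop) : 0 < eps ->
  (forall y, Rabs (y - x) < eps -> P y) -> locally x P.
Proof. intros He H. exists (mkposreal eps He). exact H. Qed.

Lemma real_analytic_PSeries (f : R -> R) x : real_analytic f ->
  exists r a, 0 < r /\ Rbar_lt r (CV_radius a) /\
    forall z, Rabs (z - x) < r -> f z = PSeries a (z - x).
Proof.
  intros Hf. destruct (Hf x) as [r [a [Hr H]]].
  assert (Hrad : forall y, Rabs y < r -> Rbar_le (Rabs y) (CV_radius a)).
  { intros y Hy.
    destruct (Rbar_lt_le_dec (CV_radius a) (Rabs y)) as [Hlt|Hle]; auto.
    exfalso. apply (CV_disk_outside a y Hlt).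
    apply ex_series_lim_0. exists (f (y + x)).
    apply is_series_Reals.
    assert (Hp := H (y + x) ltac:(replace (y + x - x) with y by ring; auto)).
    replace (y + x - x) with y in Hp by ring. exact Hp. }
  exists (r / 2), a. repeat split; [lra| |].
  - assert (h := Hrad (3 * r / 4) ltac:(rewrite Rabs_right; lra)).
    rewrite Rabs_right in h by lra.
    destruct (CV_radius a) as [c| |]; simpl in *; auto; lra.
  - intros z Hz. symmetry. apply is_pseries_unique, is_pseries_R, is_series_Reals, H. lra.
Qed.

Lemma real_analytic_C1 (f : R -> R) : real_analytic f ->
  forall x, ex_derive f x /\ continuous (Derive f) x.
Proof.
  intros Hf x. destruct (real_analytic_PSeries f x Hf) as [r [a [Hr [Hcv Heq]]]].
  assert (Hcv' : forall z, Rabs (z - x) < r -> Rbar_lt (Rabs (z - x)) (CV_radius a)).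
  { intros z Hz. destruct (CV_radius a) as [c| |]; simpl in *; auto; lra. }
  assert (Hder : forall z, Rabs (z - x) < r -> is_derive f z (PSeries (PS_derive a) (z - x))).
  { intros z Hz.
    apply (is_derive_ext_loc (fun t => PSeries a (t - x))).
    { apply (locally_Rabs z (r - Rabs (z - x))); [lra|].
      intros y Hy. symmetry. apply Heq.
      replace (y - x) with ((y - z) + (z - x)) by ring.
      assert (h := Rabs_triang (y - z) (z - x)). lra. }
    apply (is_derive_shift (PSeries a) (- x)), is_derive_PSeries, Hcv', Hz. }
  split.
  - eexists. apply Hder. rewrite Rminus_eq_0, Rabs_R0. auto.
  - apply (continuous_ext_loc _ (fun z => PSeries (PS_derive a) (z - x))).
    + apply (locally_Rabs x r); auto. intros y Hy. symmetry. apply is_derive_unique, Hder, Hy.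
    + apply (continuous_Rcomp (fun z => z - x) (PSeries (PS_derive a))); [cont|].
      apply continuity_pt_filterlim, PSeries_continuity.
      rewrite CV_radius_derive, Rminus_eq_0, Rabs_R0.
      destruct (CV_radius a) as [c| |]; simpl in *; auto; lra.
Qed.

Lemma periodic2pi_nat (f : R -> R) : periodic2pi f -> forall k t,
  f (t + 2 * PI * INR k) = f t /\ f (t - 2 * PI * INR k) = f t.
Proof.
  intros Hf k. induction k; intros t.
  - simpl. split; f_equal; ring.
  - rewrite S_INR. destruct (IHk t) as [H1 H2]. split.
    + replace (t + 2 * PI * (INR k + 1)) with ((t + 2 * PI * INR k) + 2 * PI) by ring.
      rewrite Hf. auto.
    + rewrite <- H2, <- (Hf (t - 2 * PI * (INR k + 1))). f_equal. ring.
Qed.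

Lemma periodic2pi_reduce (f : R -> R) : periodic2pi f -> forall t,
  exists u, 0 <= u <= 2 * PI /\ f t = f u.
Proof.
  intros Hf t. assert (HP := PI_RGT_0).
  destruct (archimed (t / (2 * PI))) as [H1 H2].
  set (z := (up (t / (2 * PI)) - 1)%Z).
  assert (Hz : IZR z <= t / (2 * PI) < IZR z + 1) by (unfold z; rewrite minus_IZR; simpl; lra).
  assert (Hb : 2 * PI * IZR z <= t < 2 * PI * IZR z + 2 * PI).
  { assert (E : t = 2 * PI * (t / (2 * PI))) by (field; lra).
    split; rewrite E at 1; nra. }
  exists (t - 2 * PI * IZR z). split; [lra|].
  destruct (Z.le_gt_cases 0 z) as [Hz0|Hz0].
  - destruct (IZN z Hz0) as [k ->]. rewrite <- INR_IZR_INZ.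
    symmetry. apply (periodic2pi_nat f Hf k t).
  - destruct (IZN (- z) ltac:(lia)) as [k Hk].
    replace (IZR z) with (- INR k) by (rewrite INR_IZR_INZ, <- Hk, opp_IZR; ring).
    replace (t - 2 * PI * - INR k) with (t + 2 * PI * INR k) by ring.
    symmetry. apply (periodic2pi_nat f Hf k t).
Qed.

Lemma periodic2pi_bounded (f : R -> R) : periodic2pi f -> (forall x, continuous f x) ->
  exists M, forall t, Rabs (f t) <= M.
Proof.
  intros Hf Hc. assert (HP := PI_RGT_0).
  destruct (continuity_ab_maj (fun x => Rabs (f x)) 0 (2 * PI)) as [c [Hc1 _]]; [lra| |].
  - intros x _. apply (continuity_pt_comp f Rabs).
    + apply continuity_pt_filterlim, Hc.
    + apply Rcontinuity_abs.
  - exists (Rabs (f c)). intros t. destruct (periodic2pi_reduce f Hf t) as [u [Hu ->]]. auto.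
Qed.

Lemma periodic2pi_Derive (f : R -> R) : periodic2pi f -> (forall x, ex_derive f x) ->
  periodic2pi (Derive f).
Proof.
  intros Hf Hd t. symmetry. apply is_derive_unique.
  apply (is_derive_ext (fun s => f (s + 2 * PI))); [intros; apply Hf|].
  apply is_derive_shift, Derive_correct, Hd.
Qed.

Lemma lipschitz_of_derive_bound (f f' : R -> R) L : (forall x, is_derive f x (f' x)) ->
  (forall x, Rabs (f' x) <= L) -> forall s t, Rabs (f s - f t) <= L * Rabs (s - t).
Proof.
  intros Hd HL s t.
  destruct (MVT_gen f t s f') as [c [_ Hc]].
  - intros; apply Hd.
  - intros x _. apply continuity_pt_filterlim, continuous_of_ex_derive. eexists; apply Hd.
  - rewrite Hc, Rabs_mult. apply Rmult_le_compat_r; [apply Rabs_pos | auto].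
Qed.

Lemma real_analytic_periodic_bounds (f : R -> R) : real_analytic f -> periodic2pi f ->
  exists M L, 0 <= L /\ (forall t, Rabs (f t) <= M) /\
    (forall x, is_derive f x (Derive f x)) /\ (forall x, continuous (Derive f) x) /\
    (forall x, Rabs (Derive f x) <= L).
Proof.
  intros Ha Hp. assert (H := real_analytic_C1 f Ha).
  destruct (periodic2pi_bounded f Hp) as [M HM].
  { intros x. apply continuous_of_ex_derive, H. }
  destruct (periodic2pi_bounded (Derive f)) as [L HL].
  { apply periodic2pi_Derive; auto. intros x; apply H. }
  { intros x. apply H. }
  exists M, L. split; [|split; [|split; [|split]]]; auto.
  - eapply Rle_trans; [apply Rabs_pos | apply (HL 0)].
  - intros x. apply Derive_correct, H.
  - intros x. apply H.
Qed.

(* Coquelicot states integrals in a normed module; [req] restates an equation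
   between such terms at type [R] so that [ring] and [field] apply. *)
Ltac req := match goal with |- ?x = ?y => change (@eq R x y) end.

(* Coquelicot's integral lemmas for continuous integrands [R -> R], stated with
   [Rplus], [Rmult], ... so that they can be used for rewriting. *)
Lemma ex_RInt_of_continuous (f : R -> R) a b : (forall x, continuous f x) -> ex_RInt f a b.
Proof. intros. apply (@ex_RInt_continuous R_CompleteNormedModule). intros; auto. Qed.

Lemma RInt_Rplus (f g : R -> R) a b : (forall x, continuous f x) -> (forall x, continuous g x) ->
  RInt (fun x => f x + g x) a b = RInt f a b + RInt g a b.
Proof. intros Hf Hg. exact (RInt_plus f g a b (ex_RInt_of_continuous _ _ _ Hf) (ex_RInt_of_continuous _ _ _ Hg)). Qed.

Lemma RInt_Rminus (f g : R -> R) a b : (forall x, continuous f x) -> (forall x, continuous g x) ->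
  RInt (fun x => f x - g x) a b = RInt f a b - RInt g a b.
Proof. intros Hf Hg. exact (RInt_minus f g a b (ex_RInt_of_continuous _ _ _ Hf) (ex_RInt_of_continuous _ _ _ Hg)). Qed.

Lemma RInt_Rscal (f : R -> R) a b c : (forall x, continuous f x) ->
  RInt (fun x => c * f x) a b = c * RInt f a b.
Proof. intros Hf. exact (RInt_scal f a b c (ex_RInt_of_continuous _ _ _ Hf)). Qed.

Lemma RInt_Rconst (c a b : R) : RInt (fun _ => c) a b = (b - a) * c.
Proof. exact (RInt_const a b c). Qed.

Lemma RInt_RChasles (f : R -> R) a b c : (forall x, continuous f x) ->
  RInt f a b + RInt f b c = RInt f a c.
Proof. intros Hf. exact (RInt_Chasles f a b c (ex_RInt_of_continuous _ _ _ Hf) (ex_RInt_of_continuous _ _ _ Hf)). Qed.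

Lemma RInt_Rswap (f : R -> R) a b : (forall x, continuous f x) -> RInt f b a = - RInt f a b.
Proof. intros. rewrite <- (opp_RInt_swap f a b) by (apply ex_RInt_of_continuous; auto). reflexivity. Qed.

Lemma RInt_shift (f : R -> R) a b c : (forall x, continuous f x) ->
  RInt (fun t => f (t + c)) a b = RInt f (a + c) (b + c).
Proof.
  intros Hc. assert (h := RInt_comp_lin f 1 c a b (ex_RInt_of_continuous f _ _ Hc)).
  rewrite !Rmult_1_l in h. rewrite <- h. apply RInt_ext. intros x _.
  unfold scal; simpl; unfold mult; simpl. rewrite !Rmult_1_l. reflexivity.
Qed.

Lemma RInt_reflect (f : R -> R) a b c : (forall x, continuous f x) ->
  RInt (fun t => f (c - t)) a b = RInt f (c - b) (c - a).
Proof.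
  intros Hc. assert (h := RInt_comp_lin f (-1) c a b (ex_RInt_of_continuous f _ _ Hc)).
  replace (-1 * a + c) with (c - a) in h by ring. replace (-1 * b + c) with (c - b) in h by ring.
  rewrite (RInt_Rswap f (c - a)), <- h by auto.
  rewrite (RInt_ext (fun y => scal (-1) (f (-1 * y + c))) (fun t => -1 * f (c - t))).
  - rewrite RInt_Rscal; [req; lra|]. intros; apply (continuous_Rcomp _ f); [cont | auto].
  - intros x _. unfold scal; simpl; unfold mult; simpl. do 2 f_equal. ring.
Qed.

Lemma RInt_periodic (f : R -> R) a : (forall x, continuous f x) -> periodic2pi f ->
  RInt f a (a + 2 * PI) = RInt f 0 (2 * PI).
Proof.
  intros Hc Hp.
  assert (E : RInt f (2 * PI) (a + 2 * PI) = RInt f 0 a).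
  { rewrite <- (Rplus_0_l (2 * PI)) at 1. rewrite <- RInt_shift by auto.
    apply RInt_ext. intros; apply Hp. }
  rewrite <- (RInt_RChasles f a 0), <- (RInt_RChasles f 0 (2 * PI) (a + 2 * PI)), E,
    (RInt_Rswap f 0 a) by auto.
  req. lra.
Qed.

Lemma RInt_periodic_shift (f : R -> R) c : (forall x, continuous f x) -> periodic2pi f ->
  RInt (fun t => f (t + c)) 0 (2 * PI) = RInt f 0 (2 * PI).
Proof.
  intros Hc Hp. rewrite RInt_shift, Rplus_0_l, (Rplus_comm (2 * PI)) by auto.
  apply RInt_periodic; auto.
Qed.

(* [Defs.RInt] is shadowed by Coquelicot's [RInt]; they agree on continuous integrands. *)
Lemma Defs_RInt_continuous (f : R -> R) a b : a <= b -> (forall x, continuous f x) ->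
  Defs.RInt f a b = RInt f a b.
Proof.
  intros Hab Hc.
  assert (pr : Riemann_integrable f a b).
  { apply continuity_implies_RiemannInt; auto. intros x _. apply continuity_pt_filterlim, Hc. }
  unfold Defs.RInt.
  destruct (epsilon_spec (inhabits 0) (fun v => exists pr : Riemann_integrable f a b, RiemannInt pr = v)
              (ex_intro _ (RiemannInt pr) (ex_intro _ pr eq_refl))) as [pr' <-].
  symmetry. apply RInt_Reals.
Qed.

Lemma continuous_rsum (f : nat -> R -> R) N x : (forall i, continuous (f i) x) ->
  continuous (fun t => rsum (fun i => f i t) N) x.
Proof. intros H. induction N; cbn [rsum]; [cont | apply continuous_Rplus; auto]. Qed.

Lemma is_derive_rsum (f df : nat -> R -> R) N x :
  (forall i, is_derive (f i) x (df i x)) ->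
  is_derive (fun t => rsum (fun i => f i t) N) x (rsum (fun i => df i x) N).
Proof.
  intros H. induction N; cbn [rsum].
  - apply (is_derive_const (V := R_NormedModule)).
  - apply (is_derive_plus (fun t => rsum (fun i => f i t) N) (f N)); auto.
Qed.

Lemma RInt_rsum (f : nat -> R -> R) N a b : (forall i x, continuous (f i) x) ->
  RInt (fun t => rsum (fun i => f i t) N) a b = rsum (fun i => RInt (f i) a b) N.
Proof.
  intros H. induction N; cbn [rsum].
  - rewrite RInt_Rconst. req. ring.
  - rewrite (RInt_Rplus (fun t => rsum (fun i => f i t) N) (f N)), IHN; auto.
    intros; apply continuous_rsum; auto.
Qed.

(** * Pointwise convergence of Fourier series *)

Definition dirichlet (M : nat) (u : R) : R := 1 + 2 * rsum (fun j => cos (INR (S j) * u)) M.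

Lemma dirichlet_mul_sin_half M u : dirichlet M u * sin (u / 2) = sin ((INR M + / 2) * u).
Proof.
  unfold dirichlet. induction M.
  - replace ((INR 0 + / 2) * u) with (u / 2) by (simpl; field). simpl. ring.
  - cbn [rsum]. rewrite S_INR.
    assert (E := form4 ((INR M + 1 + / 2) * u) ((INR M + / 2) * u)).
    replace (((INR M + 1 + / 2) * u + (INR M + / 2) * u) / 2) with ((INR M + 1) * u) in E by field.
    replace (((INR M + 1 + / 2) * u - (INR M + / 2) * u) / 2) with (u / 2) in E by field.
    lra.
Qed.

Lemma dirichlet_opp M u : dirichlet M (- u) = dirichlet M u.
Proof.
  unfold dirichlet. do 2 f_equal. apply rsum_ext. intros.
  rewrite <- cos_neg. f_equal. ring.
Qed.

Lemma dirichlet_periodic M : periodic2pi (dirichlet M).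
Proof.
  intros u. unfold dirichlet. do 2 f_equal. apply rsum_ext. intros i _.
  replace (INR (S i) * (u + 2 * PI)) with (INR (S i) * u + 2 * INR (S i) * PI) by ring.
  apply cos_period.
Qed.

Lemma continuous_dirichlet M x : continuous (dirichlet M) x.
Proof. unfold dirichlet. cont. apply (continuous_rsum (fun j u => cos (INR (S j) * u))). intros; cont. Qed.

Lemma RInt_cos_nat k : RInt (fun u => cos (INR (S k) * u)) 0 PI = 0.
Proof.
  assert (Hs : sin (INR (S k) * PI) = 0).
  { apply sin_eq_0_1. exists (Z.of_nat (S k)). rewrite <- INR_IZR_INZ. ring. }
  assert (Hk : 0 < INR (S k)) by (apply lt_0_INR; lia).
  set (c := INR (S k)) in *. clearbody c.
  assert (H := is_RInt_derive (fun u => sin (c * u) / c) (fun u => cos (c * u)) 0 PI).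
  rewrite (is_RInt_unique _ _ _ _ (H ltac:(intros x _; auto_derive; auto; field; lra)
                                      ltac:(intros x _; cont))).
  rewrite Rmult_0_r, sin_0, Hs. unfold minus, plus, opp. simpl. lra.
Qed.

Lemma RInt_dirichlet M : RInt (dirichlet M) 0 PI = PI.
Proof.
  unfold dirichlet.
  rewrite (RInt_Rplus (fun _ => 1)), RInt_Rconst, (RInt_Rscal (fun u => rsum (fun j => cos (INR (S j) * u)) M)),
    (RInt_rsum (fun j u => cos (INR (S j) * u))).
  - rewrite (rsum_ext _ (fun _ => 0)), rsum_const by (intros; apply RInt_cos_nat). lra.
  - intros; cont.
  - intros; apply (continuous_rsum (fun j u => cos (INR (S j) * u))); intros; cont.
  - intros; cont.
  - intros; cont. apply (continuous_rsum (fun j u => cos (INR (S j) * u))); intros; cont.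
Qed.

(* Riemann-Lebesgue for the Dirichlet kernel: near [0] the integrand is bounded
   since [H u = O(u)]; away from [0] it equals [H u / sin (u/2) * sin ((M + 1/2) u)],
   and integrating by parts gives [O(1/M)]. *)
Section RiemannLebesgue.

Variables (H H' : R -> R) (L : R).
Hypothesis HL : 0 <= L.
Hypothesis Hder : forall u, is_derive H u (H' u).
Hypothesis Hc' : forall u, continuous H' u.
Hypothesis HH : forall u, 0 <= u <= PI -> Rabs (H u) <= L * u.
Hypothesis HH' : forall u, Rabs (H' u) <= L.

Let continuous_H u : continuous H u := continuous_of_ex_derive H u (ex_intro _ (H' u) (Hder u)).

Definition sine_quotient (u : R) : R := H u / sin (u / 2).

Definition sine_quotient' (u : R) : R :=
  (H' u * sin (u / 2) - H u * (cos (u / 2) / 2)) / sin (u / 2) ^ 2.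

Lemma sine_quotient_bound u : 0 < u <= PI -> Rabs (sine_quotient u) <= 8 * L.
Proof.
  intros Hu. assert (Hs := sin_half_ge u ltac:(lra)). assert (Hh := HH u ltac:(lra)).
  unfold sine_quotient. rewrite Rabs_div, (Rabs_right (sin (u / 2))) by lra.
  apply (Rmult_le_reg_r (sin (u / 2))); [lra|].
  replace (Rabs (H u) / sin (u / 2) * sin (u / 2)) with (Rabs (H u)) by (field; lra).
  nra.
Qed.

Lemma sine_quotient'_bound d u : 0 < d -> d <= u <= PI ->
  Rabs (sine_quotient' u) <= 192 * L / d ^ 2.
Proof.
  intros Hd Hu. assert (HP4 := PI_4).
  assert (Hs := sin_half_ge u ltac:(lra)).
  assert (Hs1 : Rabs (sin (u / 2)) <= 1) by (apply Rabs_le; split; apply SIN_bound).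
  assert (Hc1 : Rabs (cos (u / 2)) <= 1) by (apply Rabs_le; split; apply COS_bound).
  assert (Hnum : Rabs (H' u * sin (u / 2) - H u * (cos (u / 2) / 2)) <= 3 * L).
  { eapply Rle_trans; [apply Rabs_triang|]. rewrite Rabs_Ropp, !Rabs_mult, Rabs_div, (Rabs_right 2) by lra.
    assert (h1 := HH' u). assert (h2 := HH u ltac:(lra)).
    assert (Rabs (H' u) * Rabs (sin (u / 2)) <= L * 1) by (apply Rmult_le_compat; auto; apply Rabs_pos).
    assert (Rabs (H u) * (Rabs (cos (u / 2)) / 2) <= L * u * (1 / 2)).
    { apply Rmult_le_compat; auto; [apply Rabs_pos | assert (h := Rabs_pos (cos (u / 2))) | ]; lra. }
    nra. }
  unfold sine_quotient'. rewrite Rabs_div by (apply pow_nonzero; lra).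
  rewrite (Rabs_right (sin (u / 2) ^ 2)) by (apply Rle_ge, pow2_ge_0).
  assert (0 < (d / 8) ^ 2) by (apply pow_lt; lra).
  assert ((d / 8) ^ 2 <= sin (u / 2) ^ 2) by (apply pow_incr; lra).
  apply Rle_trans with (3 * L / (d / 8) ^ 2).
  - unfold Rdiv. apply Rmult_le_compat; auto; [apply Rabs_pos | left; apply Rinv_0_lt_compat; lra |].
    apply Rinv_le_contravar; auto.
  - right. field. lra.
Qed.

Lemma continuous_sine_quotient u : 0 < u <= PI -> continuous sine_quotient u.
Proof.
  intros Hu. assert (Hs := sin_half_ge u ltac:(lra)).
  unfold sine_quotient. apply continuous_Rmult; [auto|].
  apply (continuous_Rinv_comp (fun y => sin (y / 2))); [cont | intro; lra].
Qed.

Lemma continuous_sine_quotient' u : 0 < u <= PI -> continuous sine_quotient' u.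
Proof.
  intros Hu. assert (Hs := sin_half_ge u ltac:(lra)).
  unfold sine_quotient'. apply continuous_Rmult; [cont; auto | apply (continuous_Rinv_comp (fun y => sin (y / 2) ^ 2))].
  - apply (continuous_Rcomp (fun y => sin (y / 2)) (fun z => z ^ 2)); [cont|].
    apply continuous_of_ex_derive. auto_derive. auto.
  - apply pow_nonzero. lra.
Qed.

Lemma RInt_sine_quotient_sin_by_parts d lam : 0 < d <= PI -> 0 < lam ->
  RInt (fun u => sine_quotient u * sin (lam * u)) d PI =
  (sine_quotient d * cos (lam * d) - sine_quotient PI * cos (lam * PI)) / lam
  + RInt (fun u => sine_quotient' u * cos (lam * u) / lam) d PI.
Proof.
  intros Hd Hlam.
  set (F := fun u => - sine_quotient u * cos (lam * u) / lam).
  set (G := fun u => sine_quotient' u * cos (lam * u) / lam).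
  assert (Hex : forall f : R -> R, (forall u, d <= u <= PI -> continuous f u) -> ex_RInt f d PI).
  { intros f Hf. apply (@ex_RInt_continuous R_CompleteNormedModule).
    rewrite Rmin_left, Rmax_right by lra. auto. }
  assert (Hftc : RInt (fun u => sine_quotient u * sin (lam * u) - G u) d PI = F PI - F d).
  { apply is_RInt_unique.
    assert (h := is_RInt_derive F (fun u => sine_quotient u * sin (lam * u) - G u) d PI).
    rewrite Rmin_left, Rmax_right in h by lra. apply h.
    - intros u Hu. assert (hs := sin_half_ge u ltac:(lra)).
      unfold F, G, sine_quotient, sine_quotient'. auto_derive.
      + repeat split; auto; [exists (H' u); apply Hder | lra].
      + replace (Derive (fun x => H x) u) with (H' u) by (symmetry; apply is_derive_unique, Hder).
        change (sin (u * / 2)) with (sin (u / 2)). change (cos (u * / 2)) with (cos (u / 2)).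
        field. lra.
    - intros u Hu. unfold G.
      cont; [apply continuous_sine_quotient | apply continuous_sine_quotient']; lra. }
  assert (Hsplit : RInt (fun u => sine_quotient u * sin (lam * u) - G u) d PI
                   = RInt (fun u => sine_quotient u * sin (lam * u)) d PI - RInt G d PI).
  { assert (Hex1 : ex_RInt (fun u => sine_quotient u * sin (lam * u)) d PI)
      by (apply Hex; intros u Hu; cont; apply continuous_sine_quotient; lra).
    assert (Hex2 : ex_RInt G d PI)
      by (apply Hex; intros u Hu; unfold G; cont; apply continuous_sine_quotient'; lra).
    exact (RInt_minus _ G d PI Hex1 Hex2). }
  assert (HF : F PI - F d = (sine_quotient d * cos (lam * d) - sine_quotient PI * cos (lam * PI)) / lam)
    by (unfold F; field; lra).
  lra.
Qed.

Lemma RInt_sine_quotient_sin_le d lam : 0 < d <= PI -> 0 < lam ->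
  Rabs (RInt (fun u => sine_quotient u * sin (lam * u)) d PI) <= (16 * L + 768 * L / d ^ 2) / lam.
Proof.
  intros Hd Hlam. assert (HP4 := PI_4). assert (0 < d ^ 2) by (apply pow_lt; lra).
  rewrite RInt_sine_quotient_sin_by_parts by auto.
  eapply Rle_trans; [apply Rabs_triang|].
  replace ((16 * L + 768 * L / d ^ 2) / lam) with (16 * L / lam + (PI - d) * (192 * L / d ^ 2 / lam)
    + (4 - PI + d) * (192 * L / d ^ 2 / lam)) by (field; lra).
  assert (0 <= (4 - PI + d) * (192 * L / d ^ 2 / lam))
    by (apply Rmult_le_pos; [lra | apply Rdiv_le_0_compat; [apply Rdiv_le_0_compat |]; lra]).
  assert (Hcos : forall x, Rabs (cos x) <= 1) by (intros; apply Rabs_le; split; apply COS_bound).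
  assert (Rabs ((sine_quotient d * cos (lam * d) - sine_quotient PI * cos (lam * PI)) / lam)
          <= 16 * L / lam).
  { assert (h1 := sine_quotient_bound PI ltac:(lra)). assert (h2 := sine_quotient_bound d Hd).
    rewrite Rabs_div, (Rabs_right lam) by lra. unfold Rdiv.
    apply Rmult_le_compat_r; [left; apply Rinv_0_lt_compat; lra|].
    eapply Rle_trans; [apply Rabs_triang|]. rewrite Rabs_Ropp, !Rabs_mult.
    assert (Rabs (sine_quotient d) * Rabs (cos (lam * d)) <= 8 * L * 1)
      by (apply Rmult_le_compat; auto; apply Rabs_pos).
    assert (Rabs (sine_quotient PI) * Rabs (cos (lam * PI)) <= 8 * L * 1)
      by (apply Rmult_le_compat; auto; apply Rabs_pos).
    lra. }
  assert (Rabs (RInt (fun u => sine_quotient' u * cos (lam * u) / lam) d PI)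
          <= (PI - d) * (192 * L / d ^ 2 / lam)).
  { apply abs_RInt_le_const; [lra | |].
    - apply (@ex_RInt_continuous R_CompleteNormedModule). rewrite Rmin_left, Rmax_right by lra.
      intros u Hu. cont. apply continuous_sine_quotient'. lra.
    - intros t Ht. assert (h := sine_quotient'_bound d t ltac:(lra) Ht).
      rewrite Rabs_div, Rabs_mult, (Rabs_right lam) by lra. unfold Rdiv.
      apply Rmult_le_compat_r; [left; apply Rinv_0_lt_compat; lra|].
      replace (192 * L * / d ^ 2) with (192 * L * / d ^ 2 * 1) by ring.
      apply Rmult_le_compat; auto; apply Rabs_pos. }
  lra.
Qed.

Lemma dirichlet_eq_sine_quotient M u : 0 < u <= PI ->
  H u * dirichlet M u = sine_quotient u * sin ((INR M + / 2) * u).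
Proof.
  intros Hu. assert (Hs := sin_half_ge u ltac:(lra)).
  unfold sine_quotient. rewrite <- dirichlet_mul_sin_half. field. lra.
Qed.

Lemma RInt_dirichlet_near_0_le d M : 0 < d <= PI ->
  Rabs (RInt (fun u => H u * dirichlet M u) 0 d) <= 8 * L * d.
Proof.
  intros Hd. replace (8 * L * d) with ((d - 0) * (8 * L)) by ring.
  apply abs_RInt_le_const; [lra | apply ex_RInt_of_continuous; intros; cont; auto; apply continuous_dirichlet |].
  intros t Ht. destruct (Req_dec t 0) as [->|Ht0].
  - assert (h := HH 0 ltac:(lra)). rewrite Rmult_0_r in h.
    rewrite (Rabs_eq_0 (H 0)) by (apply Rle_antisym; [auto | apply Rabs_pos]).
    rewrite Rmult_0_l, Rabs_R0. lra.
  - rewrite dirichlet_eq_sine_quotient, Rabs_mult by lra.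
    assert (h := sine_quotient_bound t ltac:(lra)).
    assert (hs : Rabs (sin ((INR M + / 2) * t)) <= 1) by (apply Rabs_le; split; apply SIN_bound).
    replace (8 * L) with (8 * L * 1) by ring. apply Rmult_le_compat; auto; apply Rabs_pos.
Qed.

Lemma RInt_dirichlet_cvg_0 : Un_cv (fun M => RInt (fun u => H u * dirichlet M u) 0 PI) 0.
Proof.
  intros eps Heps. assert (HP := PI_RGT_0).
  set (d := Rmin (PI / 2) (eps / (16 * L + 1))).
  assert (Hd : 0 < d <= PI) by (split; [apply Rmin_pos; [lra | apply Rdiv_lt_0_compat; lra] |
                                         unfold d; eapply Rle_trans; [apply Rmin_l | lra]]).
  assert (Hd2 : d <= eps / (16 * L + 1)) by apply Rmin_r.
  set (B := 16 * L + 768 * L / d ^ 2).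
  destruct (INR_unbounded (2 * B / eps)) as [N HN].
  exists N. intros M HM. unfold R_dist. rewrite Rminus_0_r.
  set (lam := INR M + / 2).
  assert (Hlam : 2 * B / eps < lam).
  { assert (INR N <= INR M) by (apply le_INR; lia). unfold lam. lra. }
  assert (Hlam0 : 0 < lam) by (assert (h := pos_INR M); unfold lam; lra).
  rewrite <- (RInt_RChasles _ 0 d PI) by (intros; cont; auto; apply continuous_dirichlet).
  assert (P1 := RInt_dirichlet_near_0_le d M Hd).
  assert (P2 : Rabs (RInt (fun u => H u * dirichlet M u) d PI) <= B / lam).
  { rewrite (RInt_ext _ (fun u => sine_quotient u * sin (lam * u))).
    - apply RInt_sine_quotient_sin_le; auto.
    - intros u Hu. rewrite Rmin_left, Rmax_right in Hu by lra.
      apply dirichlet_eq_sine_quotient. lra. }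
  assert (P3 : 8 * L * d < eps / 2).
  { apply Rle_lt_trans with (8 * L * (eps / (16 * L + 1))); [apply Rmult_le_compat_l; lra|].
    apply (Rmult_lt_reg_r (16 * L + 1)); [lra|].
    replace (8 * L * (eps / (16 * L + 1)) * (16 * L + 1)) with (8 * L * eps) by (field; lra). nra. }
  assert (P4 : B / lam < eps / 2).
  { apply (Rmult_lt_reg_r (2 * lam / eps)); [apply Rdiv_lt_0_compat; lra|].
    replace (B / lam * (2 * lam / eps)) with (2 * B / eps) by (field; lra).
    replace (eps / 2 * (2 * lam / eps)) with lam by (field; lra). exact Hlam. }
  eapply Rle_lt_trans; [apply Rabs_triang | lra].
Qed.

End RiemannLebesgue.

Definition fourier_partial (f : R -> R) (x : R) (M : nat) : R :=
  / (2 * PI) * RInt f 0 (2 * PI)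
  + rsum (fun j => / PI * RInt (fun t => f t * cos (INR (S j) * (x - t))) 0 (2 * PI)) M.

Lemma is_derive_sub_const (g : R -> R) (c x dg : R) :
  is_derive g x dg -> is_derive (fun t => g t - c) x dg.
Proof.
  intros H. assert (h := is_derive_minus g (fun _ => c) x dg 0 H (is_derive_const c x)).
  unfold minus, plus, opp in h. simpl in h. rewrite Ropp_0, Rplus_0_r in h. exact h.
Qed.

Lemma Un_cv_const (c : R) : Un_cv (fun _ => c) c.
Proof. intros eps He. exists 0%nat. intros. unfold R_dist. rewrite Rminus_eq_0, Rabs_R0. auto. Qed.

Section FourierSeries.

Variables (f f' : R -> R) (L : R).
Hypothesis Hder : forall x, is_derive f x (f' x).
Hypothesis Hc' : forall x, continuous f' x.
Hypothesis HL : forall x, Rabs (f' x) <= L.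
Hypothesis Hper : periodic2pi f.

Let continuous_f x : continuous f x := continuous_of_ex_derive f x (ex_intro _ (f' x) (Hder x)).

Lemma fourier_partial_dirichlet x M :
  fourier_partial f x M = / (2 * PI) * RInt (fun t => f t * dirichlet M (x - t)) 0 (2 * PI).
Proof.
  assert (HP := PI_RGT_0).
  assert (Hc : forall j t, continuous (fun t => f t * cos (INR (S j) * (x - t))) t)
    by (intros; cont; auto).
  rewrite (RInt_ext _ (fun t => f t + 2 * rsum (fun j => f t * cos (INR (S j) * (x - t))) M)).
  - rewrite RInt_Rplus, RInt_Rscal, (RInt_rsum (fun j t => f t * cos (INR (S j) * (x - t)))); auto.
    + unfold fourier_partial. rewrite rsum_scal. field. lra.
    + intros; apply (continuous_rsum (fun j t => f t * cos (INR (S j) * (x - t)))); auto.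
    + intros; cont. apply (continuous_rsum (fun j t => f t * cos (INR (S j) * (x - t)))); auto.
  - intros t _. unfold dirichlet. rewrite rsum_scal. req. ring.
Qed.

Lemma RInt_dirichlet_fold x M :
  RInt (fun t => f t * dirichlet M (x - t)) 0 (2 * PI) =
  RInt (fun u => f (u + x) * dirichlet M u) 0 PI + RInt (fun u => f (x - u) * dirichlet M u) 0 PI.
Proof.
  set (G := fun u => f (x - u) * dirichlet M u).
  assert (HG : forall y, continuous G y).
  { intros. unfold G. apply continuous_Rmult; [cont; auto | apply continuous_dirichlet]. }
  assert (HGp : periodic2pi G).
  { intros t. unfold G. rewrite dirichlet_periodic. f_equal.
    rewrite <- (Hper (x - (t + 2 * PI))). f_equal. ring. }
  rewrite (RInt_ext _ (fun t => G (x - t))) by (intros; unfold G; do 3 f_equal; ring).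
  rewrite RInt_reflect by auto.
  replace (x - 0) with ((x - 2 * PI) + 2 * PI) by ring.
  rewrite RInt_periodic, <- (RInt_periodic G (- PI)) by auto.
  replace (- PI + 2 * PI) with PI by ring.
  rewrite <- (RInt_RChasles G (- PI) 0 PI) by auto.
  replace (RInt G (- PI) 0) with (RInt (fun u => f (u + x) * dirichlet M u) 0 PI); [reflexivity|].
  replace (- PI) with (0 - PI) by ring. replace (RInt G (0 - PI) 0) with (RInt G (0 - PI) (0 - 0)) by (f_equal; ring).
  rewrite <- RInt_reflect by auto. apply RInt_ext. intros u _. unfold G.
  rewrite <- (dirichlet_opp M u). f_equal; f_equal; ring.
Qed.

Lemma fourier_partial_cvg x : Un_cv (fourier_partial f x) (f x).
Proof.
  assert (HP := PI_RGT_0).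
  assert (HL0 : 0 <= L) by (eapply Rle_trans; [apply Rabs_pos | apply (HL 0)]).
  assert (Hlip := lipschitz_of_derive_bound f f' L Hder HL).
  assert (C1 : Un_cv (fun M => RInt (fun u => (f (u + x) - f x) * dirichlet M u) 0 PI) 0).
  { apply (RInt_dirichlet_cvg_0 _ (fun u => f' (u + x)) L HL0).
    - intros u. apply is_derive_sub_const, is_derive_shift, Hder.
    - intros u. cont; auto.
    - intros u Hu. replace (L * u) with (L * Rabs (u + x - x)); [apply Hlip|].
      replace (u + x - x) with u by ring. rewrite Rabs_right; lra.
    - intros u. apply HL. }
  assert (C2 : Un_cv (fun M => RInt (fun u => (f (x - u) - f x) * dirichlet M u) 0 PI) 0).
  { apply (RInt_dirichlet_cvg_0 _ (fun u => - f' (x - u)) L HL0).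
    - intros u. apply is_derive_sub_const, is_derive_reflect, Hder.
    - intros u. cont; auto.
    - intros u Hu. replace (L * u) with (L * Rabs (x - u - x)); [apply Hlip|].
      replace (x - u - x) with (- u) by ring. rewrite Rabs_Ropp, Rabs_right; lra.
    - intros u. rewrite Rabs_Ropp. apply HL. }
  assert (C := CV_plus _ _ _ _ (Un_cv_const (f x))
                 (CV_mult _ _ _ _ (Un_cv_const (/ (2 * PI))) (CV_plus _ _ _ _ C1 C2))).
  cbv beta in C. rewrite Rplus_0_r, Rmult_0_r, Rplus_0_r in C.
  refine (Un_cv_ext _ _ _ _ C). intros M.
  assert (Hc : forall g : R -> R, (forall y, continuous g y) ->
            forall y, continuous (fun u => g u * dirichlet M u) y)
    by (intros g Hg y; apply continuous_Rmult; [auto | apply continuous_dirichlet]).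
  rewrite fourier_partial_dirichlet, RInt_dirichlet_fold.
  rewrite (RInt_ext (fun u => (f (u + x) - f x) * dirichlet M u)
             (fun u => f (u + x) * dirichlet M u - f x * dirichlet M u)) by (intros; req; ring).
  rewrite (RInt_ext (fun u => (f (x - u) - f x) * dirichlet M u)
             (fun u => f (x - u) * dirichlet M u - f x * dirichlet M u)) by (intros; req; ring).
  rewrite !RInt_Rminus, !(RInt_Rscal (dirichlet M)), RInt_dirichlet;
    try (apply Hc; intros; cont; auto); try apply continuous_dirichlet.
  req. field. lra.
Qed.

End FourierSeries.

(** * The q-part of a Fourier series *)

Lemma rsum_cos_vertex_multiple (q j : nat) (y : R) : (1 <= q)%nat ->
  rsum (fun i => cos (y + INR (j * q) * vertex_angle q i)) q = INR q * cos y.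
Proof.
  intros Hq. assert (0 < INR q) by (apply lt_0_INR; lia).
  rewrite (rsum_ext _ (fun _ => cos y)), rsum_const; [reflexivity|].
  intros i _. unfold vertex_angle. rewrite mult_INR.
  replace (y + INR j * INR q * (2 * (PI / INR q) * INR i)) with (y + 2 * INR (j * i) * PI)
    by (rewrite mult_INR; field; lra).
  apply cos_period.
Qed.

(* [2 sin (al / 2) cos (y + k * vertex_angle q i)] is a difference of consecutive
   sines, so the sum telescopes; [sin (al / 2) <> 0] since [q] does not divide [k]. *)
Lemma rsum_cos_vertex_nonmultiple (q j l : nat) (y : R) : (0 < l < q)%nat ->
  rsum (fun i => cos (y + INR (j * q + l) * vertex_angle q i)) q = 0.
Proof.
  intros Hl. assert (Hq : 0 < INR q) by (apply lt_0_INR; lia). assert (HP := PI_RGT_0).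
  set (k := (j * q + l)%nat).
  set (al := 2 * PI * INR k / INR q).
  assert (Hs : sin (al / 2) <> 0).
  { intros H0. apply sin_eq_0_0 in H0. destruct H0 as [m Hm].
    unfold al, k in Hm. rewrite plus_INR, mult_INR in Hm.
    assert (E : INR l / INR q = IZR m - INR j).
    { apply (Rmult_eq_reg_l PI); [|lra].
      replace (PI * (INR l / INR q))
        with (2 * PI * (INR j * INR q + INR l) / INR q / 2 - PI * INR j) by (field; lra).
      rewrite Hm. ring. }
    rewrite (INR_IZR_INZ j), <- minus_IZR in E.
    assert (h1 : 0 < INR l / INR q) by (apply Rdiv_lt_0_compat; [apply lt_0_INR; lia | lra]).
    assert (h2 : INR l / INR q < 1).
    { apply (Rmult_lt_reg_r (INR q)); auto.
      replace (INR l / INR q * INR q) with (INR l) by (field; lra).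
      rewrite Rmult_1_l. apply lt_INR. lia. }
    rewrite E in h1, h2. apply lt_IZR in h1. apply lt_IZR in h2. lia. }
  set (g := fun i : nat => sin (y + (INR i - / 2) * al)).
  apply (Rmult_eq_reg_l (2 * sin (al / 2))); [|lra].
  rewrite Rmult_0_r, <- rsum_scal, (rsum_ext _ (fun i => g (S i) - g i)).
  - rewrite rsum_telescope. unfold g. simpl INR at 2.
    replace (y + (INR q - / 2) * al) with ((y + (0 - / 2) * al) + 2 * INR k * PI)
      by (unfold al; field; lra).
    rewrite sin_period. ring.
  - intros i _. unfold g. rewrite S_INR, form4.
    replace ((y + (INR i + 1 - / 2) * al + (y + (INR i - / 2) * al)) / 2)
      with (y + INR k * vertex_angle q i) by (unfold al, vertex_angle; field; lra).
    replace ((y + (INR i + 1 - / 2) * al - (y + (INR i - / 2) * al)) / 2) with (al / 2) by field.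
    ring.
Qed.

Lemma rsum_blocks (A B : nat -> R) (q N : nat) : (1 <= q)%nat ->
  (forall m l, (0 < l < q)%nat -> A (m * q + l)%nat = 0) -> (forall m, A (m * q)%nat = B m) ->
  rsum (fun j => A (S j)) (N * q) = rsum (fun m => B (S m)) N.
Proof.
  intros Hq H0 H1. induction N; [reflexivity|].
  replace (S N * q)%nat with (N * q + q)%nat by lia.
  rewrite rsum_split, IHN. cbn [rsum]. f_equal.
  destruct q as [|q']; [lia|]. cbn [rsum].
  rewrite (rsum_ext _ (fun _ => 0)), rsum_const.
  - replace (S (N * S q' + q')) with (S N * S q')%nat by lia. rewrite H1. ring.
  - intros l Hl. replace (S (N * S q' + l)) with (N * S q' + S l)%nat by lia. apply H0. lia.
Qed.

Lemma Un_cv_mul_index (u : nat -> R) l q : (1 <= q)%nat -> Un_cv u l ->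
  Un_cv (fun N => u (N * q)%nat) l.
Proof.
  intros Hq H eps He. destruct (H eps He) as [N HN]. exists N. intros m Hm. apply HN. nia.
Qed.

Section RotationAverage.

Variables (n n' : R -> R) (L : R) (q : nat).
Hypothesis Hder : forall x, is_derive n x (n' x).
Hypothesis Hc' : forall x, continuous n' x.
Hypothesis HL : forall x, Rabs (n' x) <= L.
Hypothesis Hper : periodic2pi n.
Hypothesis Hq : (1 <= q)%nat.

Let continuous_n x : continuous n x := continuous_of_ex_derive n x (ex_intro _ (n' x) (Hder x)).

Lemma is_derive_rotation_average x : is_derive (rotation_average n q) x (rotation_average n' q x).
Proof.
  apply (is_derive_scal (fun t => rsum (fun i => n (regular_angles q t i)) q)).
  apply (is_derive_rsum (fun i t => n (t + vertex_angle q i)) (fun i t => n' (t + vertex_angle q i))).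
  intros i. apply is_derive_shift, Hder.
Qed.

Lemma continuous_rotation_average' x : continuous (rotation_average n' q) x.
Proof.
  unfold rotation_average, regular_angles. cont.
  apply (continuous_rsum (fun i t => n' (t + vertex_angle q i))). intros; cont; auto.
Qed.

Lemma rotation_average'_bound x : Rabs (rotation_average n' q x) <= L.
Proof.
  assert (Hq0 : 0 < INR q) by (apply lt_0_INR; lia).
  unfold rotation_average. rewrite Rabs_mult, Rabs_inv, (Rabs_right (INR q)) by lra.
  apply (Rmult_le_reg_l (INR q)); auto. rewrite <- Rmult_assoc, Rinv_r, Rmult_1_l by lra.
  eapply Rle_trans; [apply rsum_abs|].
  apply Rle_trans with (rsum (fun _ => L) q); [apply rsum_le; intros; apply HL|].
  rewrite rsum_const. lra.
Qed.

Lemma rotation_average_periodic : periodic2pi (rotation_average n q).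
Proof.
  intros t. unfold rotation_average. f_equal. apply rsum_ext. intros i _.
  unfold regular_angles. replace (t + 2 * PI + vertex_angle q i) with (t + vertex_angle q i + 2 * PI)
    by ring. apply Hper.
Qed.

Lemma RInt_rotation_average_cos (k : nat) th :
  RInt (fun t => rotation_average n q t * cos (INR k * (th - t))) 0 (2 * PI) =
  / INR q * RInt (fun s => n s * rsum (fun i => cos (INR k * (th - s) + INR k * vertex_angle q i)) q)
              0 (2 * PI).
Proof.
  unfold rotation_average, regular_angles.
  rewrite (RInt_ext _ (fun t => / INR q * rsum (fun i => n (t + vertex_angle q i) * cos (INR k * (th - t))) q)).
  2:{ intros. rewrite Rmult_assoc. f_equal. rewrite Rmult_comm, <- rsum_scal.
      apply rsum_ext. intros. req. ring. }
  rewrite (RInt_Rscal (fun t => rsum (fun i => n (t + vertex_angle q i) * cos (INR k * (th - t))) q)).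
  2:{ intros. apply (continuous_rsum (fun i t => n (t + vertex_angle q i) * cos (INR k * (th - t)))).
      intros; cont; auto. }
  rewrite (RInt_rsum (fun i t => n (t + vertex_angle q i) * cos (INR k * (th - t)))) by (intros; cont; auto).
  f_equal.
  rewrite (RInt_ext _ (fun s => rsum (fun i => n s * cos (INR k * (th - s) + INR k * vertex_angle q i)) q))
    by (intros; rewrite <- rsum_scal; reflexivity).
  rewrite (RInt_rsum (fun i s => n s * cos (INR k * (th - s) + INR k * vertex_angle q i))) by (intros; cont; auto).
  apply rsum_ext. intros i _.
  set (P := fun s => n s * cos (INR k * (th - s) + INR k * vertex_angle q i)).
  rewrite (RInt_ext _ (fun t => P (t + vertex_angle q i))) by (intros; unfold P; req; do 2 f_equal; ring).
  apply RInt_periodic_shift.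
  - intros. unfold P. cont; auto.
  - intros t. unfold P. rewrite Hper. f_equal.
    replace (INR k * (th - (t + 2 * PI)) + INR k * vertex_angle q i) with
      ((INR k * (th - t) + INR k * vertex_angle q i) + - (2 * INR k * PI)) by ring.
    rewrite <- (cos_period _ k). f_equal. ring.
Qed.

Lemma RInt_rotation_average_cos_multiple (j : nat) th :
  RInt (fun t => rotation_average n q t * cos (INR (j * q) * (th - t))) 0 (2 * PI) =
  RInt (fun t => n t * cos (INR (j * q) * (th - t))) 0 (2 * PI).
Proof.
  assert (Hq0 : 0 < INR q) by (apply lt_0_INR; lia).
  rewrite RInt_rotation_average_cos.
  rewrite (RInt_ext _ (fun s => INR q * (n s * cos (INR (j * q) * (th - s)))))
    by (intros; rewrite rsum_cos_vertex_multiple by auto; req; ring).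
  rewrite RInt_Rscal by (intros; cont; auto). req. field. lra.
Qed.

Lemma RInt_rotation_average_cos_nonmultiple (j l : nat) th : (0 < l < q)%nat ->
  RInt (fun t => rotation_average n q t * cos (INR (j * q + l) * (th - t))) 0 (2 * PI) = 0.
Proof.
  intros Hl. rewrite RInt_rotation_average_cos.
  rewrite (RInt_ext _ (fun _ => 0)) by (intros; rewrite rsum_cos_vertex_nonmultiple by auto; req; ring).
  rewrite RInt_Rconst. req. ring.
Qed.

End RotationAverage.

Lemma fourier_q_partial_cvg (n n' : R -> R) (L : R) (q : nat) theta :
  (forall x, is_derive n x (n' x)) -> (forall x, continuous n' x) -> (forall x, Rabs (n' x) <= L) ->
  periodic2pi n -> (1 <= q)%nat ->
  Un_cv (fourier_q_partial n q theta) (rotation_average n q theta).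
Proof.
  intros Hder Hc' HL Hper Hq.
  assert (HP := PI_RGT_0).
  assert (Hcn : forall x, continuous n x) by (intros x; apply continuous_of_ex_derive; eexists; apply Hder).
  assert (C := Un_cv_mul_index _ _ q Hq
    (fourier_partial_cvg (rotation_average n q) (rotation_average n' q) L
       (is_derive_rotation_average n n' q Hder) (continuous_rotation_average' n' q Hc')
       (rotation_average'_bound n' L q HL Hq) (rotation_average_periodic n q Hper) theta)).
  refine (Un_cv_ext _ _ _ _ C). intros N.
  unfold fourier_q_partial, fourier_partial. f_equal.
  - f_equal. rewrite Defs_RInt_continuous by (lra || auto).
    assert (h := RInt_rotation_average_cos_multiple n n' q Hder Hper Hq 0 theta).
    rewrite (RInt_ext (fun t => rotation_average n q t * _) (rotation_average n q)),
      (RInt_ext (fun t => n t * _) n) in h;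
      try (intros; simpl; rewrite Rmult_0_l, cos_0, Rmult_1_r; reflexivity).
    exact h.
  - apply (rsum_blocks (fun k => / PI * RInt (fun t => rotation_average n q t * cos (INR k * (theta - t))) 0 (2 * PI))
                       (fun m => fourier_pair n (m * q) theta) q N Hq).
    + intros m l Hl. rewrite (RInt_rotation_average_cos_nonmultiple n n' q Hder Hper) by auto. ring.
    + intros m. unfold fourier_pair.
      rewrite Defs_RInt_continuous, (RInt_rotation_average_cos_multiple n n' q Hder Hper Hq)
        by (lra || (intros; cont; auto)).
      reflexivity.
Qed.

Theorem mainTheorem3
  (n m : R -> R) (rho : R -> R -> R) (q : nat)
  (Hq : (2 <= q)%nat)
  (Hn : real_analytic n) (Hnp : periodic2pi n)
  (Hm : real_analytic m) (Hmp : periodic2pi m)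
  (Hpos : forall e t, 0 < e -> 0 < rho e t)
  (Hper : forall e, 0 < e -> periodic2pi (rho e))
  (Hexp : exists C d, 0 < d /\ forall e t, 0 < e < d ->
            Rabs (rho e t - (1 + e * n t + e ^ 2 * m t)) <= C * e ^ 3)
  (Hconv : exists e0, 0 < e0 /\ forall e, 0 < e < e0 -> strictly_convex (rho e)) :
  (forall theta, Pq unit_disk_rho q theta = 2 * INR q * sin (PI / INR q)) /\
  exists C d, 0 < d /\
    forall theta, exists v,
      Un_cv (fourier_q_partial n q theta) v /\
      forall e, 0 < e < d ->
        Rabs (Pq (rho e) q theta
              - (Pq unit_disk_rho q theta + 2 * e * INR q * sin (PI / INR q) * v))
          <= C * e ^ 2.
Proof.
  destruct (real_analytic_periodic_bounds n Hn Hnp) as [N0 [L [HL [HN [Hder [Hc' HL']]]]]].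
  destruct (real_analytic_periodic_bounds m Hm Hmp) as [M0 [_ [_ [HM _]]]].
  destruct (radius_expansion_first_order rho n m N0 M0 HN HM Hexp) as [W [d [HW [Hd Hrho]]]].
  split; [intros theta; apply Pq_unit_disk; exact Hq|].
  exists (Pq_error q N0 L W), d. split; [exact Hd|]. intros theta.
  exists (rotation_average n q theta).
  split; [apply (fourier_q_partial_cvg n (Derive n) L); auto; lia|].
  intros e He. destruct (Hrho e He) as [Hr Hr_half].
  rewrite Pq_unit_disk by exact Hq.
  replace (2 * INR q * sin (PI / INR q) + 2 * e * INR q * sin (PI / INR q) * rotation_average n q theta)
    with (2 * INR q * sin (PI / INR q) * (1 + e * rotation_average n q theta)) by ring.
  apply Pq_expansion; auto; try lra.
  - apply (lipschitz_of_derive_bound n (Derive n)); auto.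
  - apply Hper. lra.
Qed.
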